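(* Let $\omega:(0,\infty)\to[0,\infty)$ be a twice differentiable monotone function with $|\omega^{(j)}(\lambda)|\le a_0\lambda^{-j}$ for $j=0,1,2$ and all $\lambda>0$. Then there is a constant $C_0$ depending only on $a_0$ such that for every positive integer $m$, every $1\le k\le m$, every choice of $\sigma_1\ge\sigma_2\ge\dots\ge\sigma_m\ge0$ and $b_1,\dots,b_m>0$, and both choices of sign, \[ \Bigl|\int_0^\infty e^{\frac12 i\lambda^2}e^{\pm i\sum_{j=1}^mb_j\sqrt{\lambda^2+\sigma_j}}\,\frac{\lambda}{\sqrt{\lambda^2+\sigma_k}}\,\omega(\lambda)\,d\lambda\Bigr|\le C_0\min\Bigl[(1+\sigma_1)^{1/4},\ m^{3/2}b_k^{-1}\max_\ell b_\ell\Bigr], \] \[ \Bigl|\int_0^\infty e^{\frac12 i\lambda^2}e^{\pm i\sum_{j=1}^mb_j\sqrt{\lambda^2+\sigma_j}}\,\omega(\lambda)\,d\lambda\Bigr|\le C_0(1+\sigma_1)^{1/4}. \] *)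

From Stdlib Require Import Reals.
From Coquelicot Require Import Coquelicot.
Open Scope R_scope.

(* max_{1 <= l <= n} b l  (with value 0 for n = 0; only used for n >= 1 with b > 0) *)
Fixpoint max_1n (b : nat -> R) (n : nat) : R :=
  match n with
  | O => 0
  | S p => Rmax (max_1n b p) (b (S p))
  end.

Definition phase (s : R) (m : nat) (b sigma : nat -> R) (l : R) : R :=
  l ^ 2 / 2 + s * sum_n_m (fun j => b j * sqrt (l ^ 2 + sigma j)) 1 m.

Definition osc (ph g : R -> R) : R -> C :=
  fun l => (g l * cos (ph l), g l * sin (ph l)).

Definition improper_int_0_oo (f : R -> C) (I : C) : Prop :=
  is_RInt_gen f (at_right 0) (Rbar_locally p_infty) I.

From Stdlib Require Import Reals Lra Lia.
From Coquelicot Require Import Coquelicot.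
Open Scope R_scope.

(* The integrand is [A(x) e^(i phi(x))] with [phi'(x) = x (1 +- S(x))],
   [S(x) = sum_j b_j / sqrt (x^2 + sigma_j)], and an amplitude [A] that is a
   product of two bounded monotone factors, hence of bounded variation.  We
   bound the real parts of [e^(i th) A e^(i phi)] over every finite interval
   [[u, v]] by van der Corput estimates, uniformly in [u, v]; the same
   estimates give a tail [O(1/u)] beyond [u = 2 sum_j b_j], hence convergence.
   For the sign [+], [phi'/x >= 1] and one integration by parts suffices.  For
   the sign [-], [phi'/x = 1 - S] increases, and where it is close to [0] the
   second derivative takes over: beyond [x = (1 + sigma_1)^(1/4)] one has
   [phi'' >= 1 / (4 sqrt (1 + sigma_1))]; and where [S >= 1/2] some term of
   [S] is at least [1 / (2 m)], so that [(phi'/x)' >= x / (8 m^3 max_l b_l^2)],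
   while [S <= 2] bounds the weight [1 / sqrt (x^2 + sigma_k)] by [2 / b_k]. *)

(** * Continuity, integrals and monotonicity *)

Lemma cont_plus (f g : R -> R) x :
  continuous f x -> continuous g x -> continuous (fun y => f y + g y) x.
Proof. intros; apply (continuous_plus f g); auto. Qed.

Lemma cont_minus (f g : R -> R) x :
  continuous f x -> continuous g x -> continuous (fun y => f y - g y) x.
Proof. intros; apply (continuous_minus f g); auto. Qed.

Lemma cont_mult (f g : R -> R) x :
  continuous f x -> continuous g x -> continuous (fun y => f y * g y) x.
Proof. intros; apply (continuous_mult f g); auto. Qed.

Lemma cont_opp (f : R -> R) x : continuous f x -> continuous (fun y => - f y) x.
Proof. intros; apply (continuous_opp f); auto. Qed.

Lemma cont_inv (f : R -> R) x : continuous f x -> f x <> 0 -> continuous (fun y => / f y) x.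
Proof. intros; apply continuous_Rinv_comp; auto. Qed.

Lemma cont_div (f g : R -> R) x :
  continuous f x -> continuous g x -> g x <> 0 -> continuous (fun y => f y / g y) x.
Proof. intros; apply cont_mult, cont_inv; auto. Qed.

Lemma cont_pow2 (f : R -> R) x : continuous f x -> continuous (fun y => f y ^ 2) x.
Proof.
  intros; apply (continuous_ext (fun y => f y * f y)).
  - intros; simpl; ring.
  - apply cont_mult; auto.
Qed.

Lemma cont_cos (f : R -> R) x : continuous f x -> continuous (fun y => cos (f y)) x.
Proof. intros; apply continuous_cos_comp; auto. Qed.

Lemma cont_sin (f : R -> R) x : continuous f x -> continuous (fun y => sin (f y)) x.
Proof.
  intros; apply (continuous_comp f sin); auto.
  apply continuity_pt_filterlim, continuity_sin.
Qed.

Lemma cont_abs (f : R -> R) x : continuous f x -> continuous (fun y => Rabs (f y)) x.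
Proof. intros; apply continuous_Rabs_comp; auto. Qed.

Lemma cont_sqrt (f : R -> R) x : continuous f x -> continuous (fun y => sqrt (f y)) x.
Proof. intros; apply continuous_sqrt_comp; auto. Qed.

Ltac cont_leaf :=
  first
    [ assumption
    | match goal with
      | H : forall z, _ -> continuous ?f z |- continuous ?f _ => apply H; solve [auto | lra]
      | H : forall z, _ -> continuous ?f z |- continuous (fun w => ?f w) _ =>
          apply H; solve [auto | lra]
      end ].

Ltac cont_step :=
  first
    [ cont_leaf
    | lazymatch goal with
      | |- continuous (fun _ => ?c) _ => apply continuous_const
      | |- continuous (fun y => y) _ => apply continuous_id
      | |- continuous (fun y => @?A y + @?B y) _ => apply (cont_plus A B)
      | |- continuous (fun y => @?A y - @?B y) _ => apply (cont_minus A B)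
      | |- continuous (fun y => @?A y * @?B y) _ => apply (cont_mult A B)
      | |- continuous (fun y => @?A y / @?B y) _ => apply (cont_div A B)
      | |- continuous (fun y => - @?A y) _ => apply (cont_opp A)
      | |- continuous (fun y => / @?A y) _ => apply (cont_inv A)
      | |- continuous (fun y => cos (@?A y)) _ => apply (cont_cos A)
      | |- continuous (fun y => sin (@?A y)) _ => apply (cont_sin A)
      | |- continuous (fun y => Rabs (@?A y)) _ => apply (cont_abs A)
      | |- continuous (fun y => sqrt (@?A y)) _ => apply (cont_sqrt A)
      | |- continuous (fun y => (@?A y) ^ 2) _ => apply (cont_pow2 A)
      end ].

Ltac cont := repeat (match goal with |- continuous _ _ => cont_step end).

Lemma is_derive_continuous (f : R -> R) x l : is_derive f x l -> continuous f x.
Proof. intros H; apply (ex_derive_continuous (V := R_NormedModule)); exists l; exact H. Qed.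

Lemma ex_RInt_continuous_on (f : R -> R) a b :
  a <= b -> (forall x, a <= x <= b -> continuous f x) -> ex_RInt f a b.
Proof.
  intros Hab H; apply (ex_RInt_continuous (V := R_CompleteNormedModule)).
  rewrite Rmin_left, Rmax_right by lra; auto.
Qed.

Lemma RInt_point0 (f : R -> R) a : RInt f a a = 0.
Proof. exact (RInt_point (V := R_CompleteNormedModule) a f). Qed.

Lemma abs_RInt_le_RInt (f g : R -> R) a b :
  a <= b -> ex_RInt f a b -> ex_RInt g a b ->
  (forall x, a <= x <= b -> Rabs (f x) <= g x) -> Rabs (RInt f a b) <= RInt g a b.
Proof.
  intros Hab Hf Hg H; eapply Rle_trans; [apply abs_RInt_le; auto |].
  apply RInt_le; auto; [apply ex_RInt_norm; auto | intros; apply H; lra].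
Qed.

Lemma RInt_Chasles_cont (f : R -> R) a c b :
  a <= c -> c <= b -> (forall x, a <= x <= b -> continuous f x) ->
  RInt f a b = RInt f a c + RInt f c b.
Proof.
  intros H1 H2 Hc; symmetry.
  apply (RInt_Chasles f a c b); apply ex_RInt_continuous_on; auto; intros; apply Hc; lra.
Qed.

Lemma RInt_subinterval_le (f : R -> R) a c d b :
  a <= c -> c <= d -> d <= b ->
  (forall x, a <= x <= b -> continuous f x) -> (forall x, a <= x <= b -> 0 <= f x) ->
  RInt f c d <= RInt f a b.
Proof.
  intros H1 H2 H3 Hc Hp.
  assert (Hint : forall u v, a <= u -> u <= v -> v <= b -> 0 <= RInt f u v).
  { intros u v Hu Huv Hv; apply RInt_ge_0; auto.
    - apply ex_RInt_continuous_on; auto; intros; apply Hc; lra.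
    - intros; apply Hp; lra. }
  rewrite (RInt_Chasles_cont f a c b), (RInt_Chasles_cont f c d b);
    try (intros; apply Hc); try lra.
  assert (0 <= RInt f a c) by (apply Hint; lra).
  assert (0 <= RInt f d b) by (apply Hint; lra).
  lra.
Qed.

Definition one_signed (f : R -> R) (a b : R) :=
  (forall x, a <= x <= b -> 0 <= f x) \/ (forall x, a <= x <= b -> f x <= 0).

Definition away_from_zero (h : R -> R) (d a b : R) :=
  (forall x, a <= x <= b -> d <= h x) \/ (forall x, a <= x <= b -> h x <= - d).

Lemma RInt_derive_cont (w w' : R -> R) a b :
  a <= b -> (forall x, a <= x <= b -> is_derive w x (w' x)) ->
  (forall x, a <= x <= b -> continuous w' x) -> RInt w' a b = w b - w a.
Proof.
  intros Hab Hd Hc; apply is_RInt_unique, (is_RInt_derive w w');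
    rewrite Rmin_left, Rmax_right by lra; auto.
Qed.

Lemma RInt_abs_derive_one_signed (w w' : R -> R) a b :
  a <= b -> (forall x, a <= x <= b -> is_derive w x (w' x)) ->
  (forall x, a <= x <= b -> continuous w' x) -> one_signed w' a b ->
  RInt (fun x => Rabs (w' x)) a b = Rabs (w b - w a).
Proof.
  intros Hab Hd Hc Hs.
  assert (Hpos : forall v v' : R -> R,
    (forall x, a <= x <= b -> is_derive v x (v' x)) -> (forall x, a <= x <= b -> continuous v' x) ->
    (forall x, a <= x <= b -> 0 <= v' x) -> RInt (fun x => Rabs (v' x)) a b = Rabs (v b - v a)).
  { intros v v' Hv Hcv Hp; rewrite <- (RInt_derive_cont v v' a b) by auto.
    rewrite Rabs_pos_eq
      by (apply RInt_ge_0; auto; [apply ex_RInt_continuous_on | intros; apply Hp]; auto; lra).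
    apply RInt_ext; intros x Hx; rewrite Rmin_left, Rmax_right in Hx by lra.
    apply Rabs_pos_eq, Hp; lra. }
  destruct Hs as [Hs | Hs]; [apply Hpos; auto |].
  rewrite (RInt_ext _ (fun x => Rabs (- w' x))) by (intros; rewrite Rabs_Ropp; reflexivity).
  replace (w b - w a) with (- (- w b - - w a)) by ring; rewrite Rabs_Ropp.
  apply (Hpos (fun x => - w x) (fun x => - w' x)).
  - intros; apply (is_derive_opp w); auto.
  - intros; cont.
  - intros x Hx; specialize (Hs x Hx); lra.
Qed.

Lemma nondecreasing_of_derive_nonneg (h h' : R -> R) a b :
  (forall x, a <= x <= b -> is_derive h x (h' x)) ->
  (forall x, a <= x <= b -> continuous h' x) ->
  (forall x, a <= x <= b -> 0 <= h' x) ->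
  forall x y, a <= x -> x <= y -> y <= b -> h x <= h y.
Proof.
  intros Hd Hc Hp x y Hx Hxy Hy.
  assert (0 <= RInt h' x y).
  { apply RInt_ge_0; auto.
    - apply ex_RInt_continuous_on; auto; intros; apply Hc; lra.
    - intros; apply Hp; lra. }
  rewrite (RInt_derive_cont h h' x y) in * by (auto; intros; (apply Hd || apply Hc); lra).
  lra.
Qed.

Lemma derive_nonneg_of_nondecreasing (f : R -> R) x l :
  0 < x -> (forall u v, 0 < u -> u <= v -> f u <= f v) -> is_derive f x l -> 0 <= l.
Proof.
  intros Hx Hm Hd; apply is_derive_Reals in Hd.
  destruct (Rle_or_lt 0 l) as [| Hl]; auto.
  destruct (Hd (- l / 2)) as [[d Hd0] Hdd]; [lra |]; simpl in Hdd.
  assert (Hh : 0 < Rmin (d / 2) 1) by (apply Rmin_pos; lra).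
  assert (Hhd : Rmin (d / 2) 1 < d) by (generalize (Rmin_l (d / 2) 1); lra).
  set (h := Rmin (d / 2) 1) in *.
  specialize (Hdd h (Rgt_not_eq _ _ Hh)).
  rewrite Rabs_pos_eq in Hdd by lra.
  apply Rabs_lt_between in Hdd; auto.
  assert (f x <= f (x + h)) by (apply Hm; lra).
  assert (0 <= (f (x + h) - f x) / h) by (apply Rdiv_le_0_compat; lra).
  lra.
Qed.

Lemma one_signed_derive_of_monotone (f : R -> R) u v :
  0 < u ->
  ((forall x y, 0 < x -> x <= y -> f x <= f y) \/ (forall x y, 0 < x -> x <= y -> f y <= f x)) ->
  (forall x, u <= x <= v -> ex_derive f x) -> one_signed (Derive f) u v.
Proof.
  intros Hu [Hm | Hm] Hd; [left | right]; intros x Hx; specialize (Hd x Hx).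
  - apply (derive_nonneg_of_nondecreasing f x); [lra | auto | apply Derive_correct; auto].
  - assert (0 <= - Derive f x); [| lra].
    apply (derive_nonneg_of_nondecreasing (fun y => - f y) x); [lra | |].
    + intros a c Ha Hac; specialize (Hm a c Ha Hac); lra.
    + apply (is_derive_opp f), Derive_correct; auto.
Qed.

Lemma RInt_lin_comb (f g : R -> R) c1 c2 a b :
  ex_RInt f a b -> ex_RInt g a b ->
  RInt (fun x => c1 * f x + c2 * g x) a b = c1 * RInt f a b + c2 * RInt g a b.
Proof.
  intros Hf Hg; apply is_RInt_unique.
  apply (is_RInt_plus (V := R_NormedModule) (fun x => scal c1 (f x)) (fun x => scal c2 (g x)));
    apply (is_RInt_scal (V := R_NormedModule)), (RInt_correct (V := R_CompleteNormedModule)); auto.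
Qed.

Lemma RInt_abs_derive_mult_le (w q w' q' : R -> R) a b W Q :
  a <= b ->
  (forall x, a <= x <= b -> is_derive w x (w' x)) ->
  (forall x, a <= x <= b -> is_derive q x (q' x)) ->
  (forall x, a <= x <= b -> continuous w' x) ->
  (forall x, a <= x <= b -> continuous q' x) ->
  one_signed w' a b -> one_signed q' a b ->
  (forall x, a <= x <= b -> 0 <= w x <= W) ->
  (forall x, a <= x <= b -> 0 <= q x <= Q) ->
  RInt (fun x => Rabs (w' x * q x + w x * q' x)) a b <= 2 * W * Q.
Proof.
  intros Hab Hw Hq Hcw' Hcq' Hsw Hsq HW HQ.
  assert (Hcw : forall x, a <= x <= b -> continuous w x)
    by (intros; eapply is_derive_continuous; eauto).
  assert (Hcq : forall x, a <= x <= b -> continuous q x)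
    by (intros; eapply is_derive_continuous; eauto).
  assert (Hexw : ex_RInt (fun x => Rabs (w' x)) a b)
    by (apply ex_RInt_continuous_on; auto; intros; cont).
  assert (Hexq : ex_RInt (fun x => Rabs (q' x)) a b)
    by (apply ex_RInt_continuous_on; auto; intros; cont).
  apply Rle_trans with (RInt (fun x => Q * Rabs (w' x) + W * Rabs (q' x)) a b).
  - apply RInt_le; auto.
    + apply ex_RInt_continuous_on; auto; intros; cont.
    + apply ex_RInt_continuous_on; auto; intros; cont.
    + intros x Hx; destruct (HW x ltac:(lra)), (HQ x ltac:(lra)).
      eapply Rle_trans; [apply Rabs_triang |].
      rewrite !Rabs_mult, (Rabs_pos_eq (q x)), (Rabs_pos_eq (w x)) by lra.
      generalize (Rabs_pos (w' x)) (Rabs_pos (q' x)); intros; nra.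
  - rewrite RInt_lin_comb by auto.
    rewrite !(RInt_abs_derive_one_signed _ _ a b) by auto.
    destruct (HW a ltac:(lra)), (HW b ltac:(lra)), (HQ a ltac:(lra)), (HQ b ltac:(lra)).
    assert (Rabs (w b - w a) <= W) by (apply Rabs_le; lra).
    assert (Rabs (q b - q a) <= Q) by (apply Rabs_le; lra).
    nra.
Qed.

Lemma level_crossing (h : R -> R) a b th :
  a <= b -> (forall x, a <= x <= b -> continuous h x) ->
  (forall x y, a <= x -> x <= y -> y <= b -> h x <= h y) ->
  exists c, a <= c <= b /\
    (a < c -> forall x, a <= x <= c -> h x <= th) /\
    (c < b -> forall x, c <= x <= b -> th <= h x).
Proof.
  intros Hab Hc Hm.
  destruct (Rle_lt_dec th (h a)) as [Ha | Ha].
  { exists a; repeat split; try lra; intros _ x Hx.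
    apply Rle_trans with (h a); auto; apply Hm; lra. }
  destruct (Rle_lt_dec (h b) th) as [Hb | Hb].
  { exists b; repeat split; try lra; intros _ x Hx.
    apply Rle_trans with (h b); auto; apply Hm; lra. }
  assert (Hc' : forall x, a <= x <= b -> continuity_pt (fun x => h x - th) x).
  { intros x Hx; apply continuity_pt_filterlim, (cont_minus h (fun _ => th)).
    - apply Hc; lra.
    - apply continuous_const. }
  assert (Hlt : a < b) by (destruct (Req_dec a b) as [<- | ]; lra).
  destruct (Ranalysis5.IVT_interv (fun x => h x - th) a b Hc' Hlt) as [z [Hz Hhz]];
    cbv beta in *; try lra.
  exists z; repeat split; try lra; intros _ x Hx.
  - apply Rle_trans with (h z); [apply Hm | ]; lra.
  - apply Rle_trans with (h z); [| apply Hm]; lra.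
Qed.

Lemma RInt_split_at_level (f h : R -> R) a b th K1 K2 :
  a <= b -> 0 <= K1 -> 0 <= K2 ->
  (forall x, a <= x <= b -> continuous f x) ->
  (forall x, a <= x <= b -> continuous h x) ->
  (forall x y, a <= x -> x <= y -> y <= b -> h x <= h y) ->
  (forall c, a < c <= b -> (forall x, a <= x <= c -> h x <= th) -> Rabs (RInt f a c) <= K1) ->
  (forall c, a <= c < b -> (forall x, c <= x <= b -> th <= h x) -> Rabs (RInt f c b) <= K2) ->
  Rabs (RInt f a b) <= K1 + K2.
Proof.
  intros Hab HK1 HK2 Hcf Hch Hm H1 H2.
  destruct (level_crossing h a b th Hab Hch Hm) as [c [Hc [Hac Hcb]]].
  rewrite (RInt_Chasles_cont f a c b) by (auto; lra).
  eapply Rle_trans; [apply Rabs_triang | apply Rplus_le_compat].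
  - destruct (Req_dec a c) as [<- | Hne].
    + rewrite RInt_point0, Rabs_R0; lra.
    + apply H1; [lra | apply Hac; lra].
  - destruct (Req_dec c b) as [-> | Hne].
    + rewrite RInt_point0, Rabs_R0; lra.
    + apply H2; [lra | apply Hcb; lra].
Qed.

Lemma RInt_split_at_point (f : R -> R) a b p K1 K2 :
  a <= b -> 0 <= K1 -> 0 <= K2 ->
  (forall x, a <= x <= b -> continuous f x) ->
  (forall c, a < c <= b -> c <= p -> Rabs (RInt f a c) <= K1) ->
  (forall c, a <= c < b -> p <= c -> Rabs (RInt f c b) <= K2) ->
  Rabs (RInt f a b) <= K1 + K2.
Proof.
  intros Hab HK1 HK2 Hcf H1 H2.
  apply (RInt_split_at_level f (fun x => x) a b p); auto.
  - intros; apply continuous_id.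
  - intros c Hc Hp; apply H1; auto; apply Hp; lra.
  - intros c Hc Hp; apply H2; auto; apply Hp; lra.
Qed.

(** * First and second derivative tests *)

Lemma Rabs_parts_boundary_le (sn g h d G : R) :
  Rabs sn <= 1 -> 0 < d -> d <= Rabs h -> Rabs g <= G -> Rabs (sn * g / h) <= G / d.
Proof.
  intros Hs Hd Hh Hg; unfold Rdiv; rewrite !Rabs_mult, Rabs_inv.
  assert (/ Rabs h <= / d) by (apply Rinv_le_contravar; auto).
  assert (0 < / Rabs h) by (apply Rinv_0_lt_compat; lra).
  generalize (Rabs_pos sn) (Rabs_pos g); intros.
  apply Rle_trans with (1 * G * / d); [| lra].
  apply Rmult_le_compat; try apply Rmult_le_compat; try lra; apply Rmult_le_pos; lra.
Qed.

Lemma Rabs_parts_remainder_le (sn g g' h h' d G : R) :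
  Rabs sn <= 1 -> 0 < d -> d <= Rabs h -> Rabs g <= G ->
  Rabs (sn * (g' / h - g * (h' / (h * h)))) <= / d * Rabs g' + G * Rabs (h' / (h * h)).
Proof.
  intros Hs Hd Hh Hg; rewrite Rabs_mult.
  assert (Rabs (g' / h) <= / d * Rabs g').
  { unfold Rdiv; rewrite Rabs_mult, Rabs_inv, Rmult_comm.
    apply Rmult_le_compat_r; [apply Rabs_pos | apply Rinv_le_contravar; auto]. }
  assert (Rabs (g * (h' / (h * h))) <= G * Rabs (h' / (h * h))).
  { rewrite Rabs_mult; apply Rmult_le_compat_r; [apply Rabs_pos | auto]. }
  assert (Rabs (g' / h - g * (h' / (h * h))) <= / d * Rabs g' + G * Rabs (h' / (h * h)))
    by (eapply Rle_trans; [apply Rabs_triang |]; rewrite Rabs_Ropp; lra).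
  generalize (Rabs_pos sn) (Rabs_pos (g' / h - g * (h' / (h * h)))); intros; nra.
Qed.

Section Oscillatory_estimates.

Variables (phi r h h' g g' : R -> R) (a b th : R).
Hypothesis phi_deriv : forall x, a <= x <= b -> is_derive phi x (r x * h x).
Hypothesis h_deriv : forall x, a <= x <= b -> is_derive h x (h' x).
Hypothesis g_deriv : forall x, a <= x <= b -> is_derive g x (g' x).
Hypothesis r_cont : forall x, a <= x <= b -> continuous r x.
Hypothesis h'_cont : forall x, a <= x <= b -> continuous h' x.
Hypothesis g'_cont : forall x, a <= x <= b -> continuous g' x.

Let phi_cont x : a <= x <= b -> continuous phi x.
Proof. intros; eapply is_derive_continuous; eauto. Qed.
Let h_cont x : a <= x <= b -> continuous h x.
Proof. intros; eapply is_derive_continuous; eauto. Qed.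
Let g_cont x : a <= x <= b -> continuous g x.
Proof. intros; eapply is_derive_continuous; eauto. Qed.

Lemma RInt_abs_derive_inv_le u v d :
  a <= u -> u <= v -> v <= b -> 0 < d -> away_from_zero h d u v -> one_signed h' u v ->
  RInt (fun x => Rabs (h' x / (h x * h x))) u v <= / d.
Proof.
  intros Hau Huv Hvb Hd Hh Hs.
  assert (Hsq : forall x, u <= x <= v -> 0 < h x * h x /\ h x <> 0).
  { intros x Hx; destruct Hh as [H | H]; specialize (H x Hx); split; nra || lra. }
  rewrite (RInt_abs_derive_one_signed (fun x => - / h x)); auto.
  - destruct Hh as [H | H]; generalize (H u ltac:(lra)) (H v ltac:(lra)); intros Hu Hv.
    + assert (/ h u <= / d) by (apply Rinv_le_contravar; lra).
      assert (/ h v <= / d) by (apply Rinv_le_contravar; lra).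
      assert (0 < / h u) by (apply Rinv_0_lt_compat; lra).
      assert (0 < / h v) by (apply Rinv_0_lt_compat; lra).
      apply Rabs_le; lra.
    + assert (/ - h u <= / d) by (apply Rinv_le_contravar; lra).
      assert (/ - h v <= / d) by (apply Rinv_le_contravar; lra).
      assert (0 < / - h u) by (apply Rinv_0_lt_compat; lra).
      assert (0 < / - h v) by (apply Rinv_0_lt_compat; lra).
      rewrite !Rinv_opp in *; apply Rabs_le; lra.
  - intros x Hx; destruct (Hsq x Hx).
    auto_derive; [split; [exists (h' x); apply h_deriv; lra | auto] |].
    replace (Derive (fun y => h y) x) with (h' x)
      by (symmetry; apply is_derive_unique, h_deriv; lra).
    field; auto.
  - intros x Hx; destruct (Hsq x Hx); cont; lra.
  - destruct Hs as [H | H]; [left | right]; intros x Hx; destruct (Hsq x Hx);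
      specialize (H x Hx); unfold Rdiv.
    + apply Rmult_le_pos; [lra | left; apply Rinv_0_lt_compat; lra].
    + apply Rmult_le_0_r; [lra | left; apply Rinv_0_lt_compat; lra].
Qed.

(* Integration by parts against [(sin (phi + th))' = r h cos (phi + th)]. *)
Lemma RInt_osc_by_parts u v :
  a <= u -> u <= v -> v <= b -> (forall x, u <= x <= v -> h x <> 0) ->
  RInt (fun x => r x * g x * cos (phi x + th)) u v =
    sin (phi v + th) * g v / h v - sin (phi u + th) * g u / h u
    - RInt (fun x => sin (phi x + th) * (g' x / h x - g x * (h' x / (h x * h x)))) u v.
Proof.
  intros Hau Huv Hvb Hh0.
  set (M := fun x => r x * g x * cos (phi x + th)).
  set (E := fun x => sin (phi x + th) * (g' x / h x - g x * (h' x / (h x * h x)))).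
  assert (HcM : forall x, u <= x <= v -> continuous M x) by (intros; unfold M; cont; lra).
  assert (HcE : forall x, u <= x <= v -> continuous E x).
  { intros x Hx; specialize (Hh0 x Hx); unfold E; cont; try lra;
      apply Rmult_integral_contrapositive; auto. }
  rewrite <- (RInt_derive_cont (fun x => sin (phi x + th) * g x / h x) (fun x => M x + E x) u v);
    auto.
  - rewrite (RInt_plus (V := R_CompleteNormedModule) M E);
      try (apply ex_RInt_continuous_on; auto).
    unfold plus; simpl; lra.
  - intros x Hx; specialize (Hh0 x Hx); auto_derive.
    + repeat split; auto; [exists (r x * h x) | exists (g' x) | exists (h' x)];
        (apply phi_deriv || apply g_deriv || apply h_deriv); lra.
    + replace (Derive (fun y => phi y) x) with (r x * h x)
        by (symmetry; apply is_derive_unique, phi_deriv; lra).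
      replace (Derive (fun y => g y) x) with (g' x)
        by (symmetry; apply is_derive_unique, g_deriv; lra).
      replace (Derive (fun y => h y) x) with (h' x)
        by (symmetry; apply is_derive_unique, h_deriv; lra).
      unfold M, E; field; auto.
  - intros x Hx; apply (cont_plus M E); auto.
Qed.

Lemma first_derivative_test u v d G V :
  a <= u -> u <= v -> v <= b -> 0 < d -> away_from_zero h d u v -> one_signed h' u v ->
  (forall x, u <= x <= v -> Rabs (g x) <= G) ->
  RInt (fun x => Rabs (g' x)) u v <= V ->
  Rabs (RInt (fun x => r x * g x * cos (phi x + th)) u v) <= (3 * G + V) / d.
Proof.
  intros Hau Huv Hvb Hd Hh Hs HG HV.
  assert (Hhd : forall x, u <= x <= v -> d <= Rabs (h x)).
  { intros x Hx; destruct Hh as [H | H]; specialize (H x Hx);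
      [rewrite Rabs_pos_eq | rewrite Rabs_left]; lra. }
  assert (Hh0 : forall x, u <= x <= v -> h x <> 0).
  { intros x Hx Hz; specialize (Hhd x Hx); rewrite Hz, Rabs_R0 in Hhd; lra. }
  assert (HG0 : 0 <= G) by (specialize (HG u ltac:(lra)); generalize (Rabs_pos (g u)); lra).
  assert (Hq : forall x, u <= x <= v -> continuous (fun y => h' y / (h y * h y)) x).
  { intros x Hx; specialize (Hh0 x Hx); cont; apply Rmult_integral_contrapositive; auto. }
  assert (Hrem : Rabs (RInt (fun x => sin (phi x + th) * (g' x / h x - g x * (h' x / (h x * h x))))
                        u v) <= V / d + G / d).
  { eapply Rle_trans.
    { apply abs_RInt_le_RInt; [lra | apply ex_RInt_continuous_on; auto; intros; cont; auto | |].
      - apply ex_RInt_continuous_on with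
          (f := fun x => / d * Rabs (g' x) + G * Rabs (h' x / (h x * h x))); auto; intros; cont.
      - intros x Hx; apply Rabs_parts_remainder_le; auto; apply Rabs_le, SIN_bound. }
    rewrite RInt_lin_comb by (apply ex_RInt_continuous_on; auto; intros; cont).
    assert (RInt (fun x => Rabs (h' x / (h x * h x))) u v <= / d)
      by (apply RInt_abs_derive_inv_le; auto).
    assert (0 < / d) by (apply Rinv_0_lt_compat; lra).
    unfold Rdiv; nra. }
  assert (Hend : forall x, u <= x <= v -> Rabs (sin (phi x + th) * g x / h x) <= G / d)
    by (intros; apply Rabs_parts_boundary_le; auto; apply Rabs_le, SIN_bound).
  rewrite RInt_osc_by_parts by auto.
  generalize (Hend u ltac:(lra)) (Hend v ltac:(lra)); intros.
  replace ((3 * G + V) / d) with (G / d + G / d + (V / d + G / d)) by (field; lra).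
  eapply Rle_trans; [apply Rabs_triang |]; rewrite Rabs_Ropp.
  eapply Rle_trans; [apply Rplus_le_compat_r, Rabs_triang |]; rewrite Rabs_Ropp.
  lra.
Qed.

Lemma RInt_abs_le_level_increment u v mu G :
  a <= u -> u <= v -> v <= b -> 0 < mu ->
  (forall x, u <= x <= v -> 0 <= r x) -> (forall x, u <= x <= v -> mu * r x <= h' x) ->
  (forall x, u <= x <= v -> Rabs (g x) <= G) ->
  Rabs (RInt (fun x => r x * g x * cos (phi x + th)) u v) <= G / mu * (h v - h u).
Proof.
  intros Hau Huv Hvb Hmu Hr Hrh HG.
  rewrite <- (RInt_derive_cont h h' u v) by (auto; intros; (apply h_deriv || apply h'_cont); lra).
  rewrite <- (RInt_scal (V := R_CompleteNormedModule))
    by (apply ex_RInt_continuous_on; auto; intros; apply h'_cont; lra).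
  apply abs_RInt_le_RInt; auto.
  - apply ex_RInt_continuous_on; auto; intros; cont.
  - apply (ex_RInt_scal (V := R_CompleteNormedModule)), ex_RInt_continuous_on; auto;
      intros; apply h'_cont; lra.
  - intros x Hx; unfold scal; simpl; unfold mult; simpl.
    specialize (Hr x Hx); specialize (Hrh x Hx); specialize (HG x Hx).
    rewrite !Rabs_mult, (Rabs_pos_eq (r x)) by auto.
    assert (Rabs (cos (phi x + th)) <= 1) by (apply Rabs_le, COS_bound).
    assert (r x <= h' x / mu) by (apply Rmult_le_reg_l with mu; [lra | field_simplify; lra]).
    generalize (Rabs_pos (g x)) (Rabs_pos (cos (phi x + th))); intros.
    replace (G / mu * h' x) with (h' x / mu * G) by (field; lra).
    apply Rle_trans with (r x * G * 1); [| nra].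
    apply Rmult_le_compat; try nra.
Qed.

(* Split where [|h| <= sqrt mu]: outside, the first derivative test with
   [d = sqrt mu]; inside, [r <= h' / mu] and [h] increases by at most [2 d]. *)
Lemma second_derivative_test u v mu G V :
  a <= u -> u <= v -> v <= b -> 0 < mu ->
  (forall x, u <= x <= v -> 0 <= r x) -> (forall x, u <= x <= v -> mu * r x <= h' x) ->
  (forall x, u <= x <= v -> Rabs (g x) <= G) ->
  RInt (fun x => Rabs (g' x)) u v <= V ->
  Rabs (RInt (fun x => r x * g x * cos (phi x + th)) u v) <= (8 * G + 2 * V) / sqrt mu.
Proof.
  intros Hau Huv Hvb Hmu Hr Hrh HG HV.
  set (d := sqrt mu).
  assert (Hd : 0 < d) by (apply sqrt_lt_R0; auto).
  assert (Hdd : d * d = mu) by (apply sqrt_sqrt; lra).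
  assert (HG0 : 0 <= G) by (specialize (HG u ltac:(lra)); generalize (Rabs_pos (g u)); lra).
  assert (Hh' : forall x, u <= x <= v -> 0 <= h' x).
  { intros x Hx; specialize (Hr x Hx); specialize (Hrh x Hx); nra. }
  assert (Hhm : forall x y, u <= x -> x <= y -> y <= v -> h x <= h y).
  { intros; apply (nondecreasing_of_derive_nonneg h h' u v); auto;
      intros; (apply h_deriv || apply h'_cont); lra. }
  assert (HV0 : 0 <= V).
  { eapply Rle_trans; [| exact HV]; apply RInt_ge_0; auto.
    - apply ex_RInt_continuous_on; auto; intros; cont.
    - intros; apply Rabs_pos. }
  assert (HFD : forall c e, u <= c -> c <= e -> e <= v -> away_from_zero h d c e ->
            Rabs (RInt (fun x => r x * g x * cos (phi x + th)) c e) <= (3 * G + V) / d).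
  { intros c e Hc Hce He Hhd; apply first_derivative_test; auto; try lra.
    - left; intros; apply Hh'; lra.
    - intros; apply HG; lra.
    - eapply Rle_trans; [| exact HV].
      apply RInt_subinterval_le; auto; intros; [cont | apply Rabs_pos]. }
  assert (Hcf : forall x, u <= x <= v -> continuous (fun x => r x * g x * cos (phi x + th)) x)
    by (intros; cont).
  replace ((8 * G + 2 * V) / d) with ((3 * G + V) / d + (2 * G / d + (3 * G + V) / d))
    by (field; lra).
  assert (0 <= (3 * G + V) / d) by (apply Rdiv_le_0_compat; lra).
  assert (0 <= 2 * G / d) by (apply Rdiv_le_0_compat; lra).
  apply (RInt_split_at_level _ h u v (- d));
    [lra | lra | lra | exact Hcf | intros; apply h_cont; lra | exact Hhm | |].
  { intros c Hc Hhc; apply HFD; try lra; right; auto. }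
  intros c Hc Hhc.
  apply (RInt_split_at_level _ h c v d);
    [lra | lra | lra | intros; apply Hcf; lra | intros; apply h_cont; lra
    | intros; apply Hhm; lra | |].
  - intros e He Hhe.
    eapply Rle_trans;
      [apply (RInt_abs_le_level_increment c e mu G); auto; try lra; intros;
         (apply Hr || apply Hrh || apply HG); lra |].
    generalize (Hhc c ltac:(lra)) (Hhe e ltac:(lra)); intros.
    rewrite <- Hdd; apply Rle_trans with (G / (d * d) * (2 * d)).
    + apply Rmult_le_compat_l; [apply Rdiv_le_0_compat; nra | lra].
    + right; field; lra.
  - intros e He Hhe; apply HFD; try lra; left; auto.
Qed.

End Oscillatory_estimates.

(** * Improper integrals over (0, +oo) *)

Notation near_0_and_oo := (filter_prod (at_right 0) (Rbar_locally p_infty)).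

Lemma near_0_and_oo_proper : ProperFilter near_0_and_oo.
Proof.
  apply Hierarchy.filter_prod_proper; try apply at_right_proper_filter; apply Rbar_locally_filter.
Qed.

Lemma near_0_and_oo_interval d B :
  0 < d -> near_0_and_oo (fun ab : R * R => 0 < fst ab < d /\ B < snd ab).
Proof.
  intros Hd; apply (Filter_prod _ _ _ (fun a => 0 < a < d) (fun b => B < b)).
  - exists (mkposreal d Hd); intros y Hy Hy0; simpl in *.
    unfold ball in Hy; simpl in Hy; unfold AbsRing_ball, abs, minus, plus, opp in Hy; simpl in Hy.
    rewrite Ropp_0, Rplus_0_r in Hy; apply Rabs_lt_between in Hy; lra.
  - exists B; auto.
  - intros; simpl; auto.
Qed.

Lemma Rabs_RInt_swap (f : R -> R) a b : ex_RInt f a b -> Rabs (RInt f b a) = Rabs (RInt f a b).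
Proof.
  intros H; rewrite <- (opp_RInt_swap (V := R_CompleteNormedModule)) by auto.
  unfold opp; simpl; apply Rabs_Ropp.
Qed.

Lemma cauchy_at_0_of_bounded (f : R -> R) M :
  (forall x, 0 < x -> continuous f x) -> (forall x, 0 < x <= 1 -> Rabs (f x) <= M) ->
  forall eps, 0 < eps ->
  exists d, 0 < d /\ forall u v, 0 < u -> u <= v -> v <= d -> Rabs (RInt f u v) <= eps.
Proof.
  intros Hc HM eps Heps.
  assert (HM0 : 0 <= M) by (specialize (HM 1 ltac:(lra)); generalize (Rabs_pos (f 1)); lra).
  exists (Rmin 1 (eps / (M + 1))); split.
  { apply Rmin_pos; [lra | apply Rdiv_lt_0_compat; lra]. }
  intros u v Hu Huv Hv.
  generalize (Rmin_l 1 (eps / (M + 1))) (Rmin_r 1 (eps / (M + 1))); intros H1 H2.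
  eapply Rle_trans.
  { apply abs_RInt_le_const; auto.
    - apply ex_RInt_continuous_on; auto; intros; apply Hc; lra.
    - intros; apply HM; lra. }
  apply Rle_trans with (eps / (M + 1) * (M + 1)); [| right; field; lra].
  apply Rmult_le_compat; lra.
Qed.

Lemma improper_integral_cauchy (f : R -> R) :
  (forall x, 0 < x -> continuous f x) ->
  (forall eps, 0 < eps ->
     exists d, 0 < d /\ forall u v, 0 < u -> u <= v -> v <= d -> Rabs (RInt f u v) <= eps) ->
  (forall eps, 0 < eps ->
     exists B, forall u v, B <= u -> u <= v -> Rabs (RInt f u v) <= eps) ->
  exists I, filterlim (fun ab : R * R => RInt f (fst ab) (snd ab)) near_0_and_oo (locally I).
Proof.
  intros Hc H0 Hoo.
  assert (Hex : forall u v, 0 < u -> 0 < v -> ex_RInt f u v).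
  { intros u v Hu Hv; destruct (Rle_or_lt u v).
    - apply ex_RInt_continuous_on; auto; intros; apply Hc; lra.
    - apply ex_RInt_swap, ex_RInt_continuous_on; try lra; intros; apply Hc; lra. }
  apply (filterlim_locally_cauchy (U := R_CompleteSpace) (FF := near_0_and_oo_proper)).
  intros [eps Heps]; simpl.
  destruct (H0 (eps / 3)) as [d [Hd Hd']]; [lra |].
  destruct (Hoo (eps / 3)) as [B HB]; [lra |].
  exists (fun ab : R * R => 0 < fst ab < Rmin d 1 /\ Rmax B 1 < snd ab).
  split; [apply near_0_and_oo_interval, Rmin_pos; lra |].
  intros [a b] [a' b'] [[Ha Ha1] Hb] [[Ha' Ha1'] Hb']; simpl in *.
  generalize (Rmin_l d 1) (Rmin_r d 1) (Rmax_l B 1) (Rmax_r B 1); intros.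
  assert (Hleft : Rabs (RInt f a a') <= eps / 3).
  { destruct (Rle_or_lt a a').
    - apply Hd'; lra.
    - rewrite <- Rabs_RInt_swap by (apply Hex; lra); apply Hd'; lra. }
  assert (Hright : Rabs (RInt f b' b) <= eps / 3).
  { destruct (Rle_or_lt b' b).
    - apply HB; lra.
    - rewrite <- Rabs_RInt_swap by (apply Hex; lra); apply HB; lra. }
  assert (E1 := RInt_Chasles f a a' b (Hex a a' ltac:(lra) ltac:(lra))
                                      (Hex a' b ltac:(lra) ltac:(lra))).
  assert (E2 := RInt_Chasles f a' b' b (Hex a' b' ltac:(lra) ltac:(lra))
                                       (Hex b' b ltac:(lra) ltac:(lra))).
  unfold plus in E1, E2; simpl in E1, E2.
  apply (norm_compat1 (V := R_NormedModule)).
  unfold norm, minus, plus, opp; simpl; unfold abs; simpl.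
  replace (RInt f a' b' + - RInt f a b) with (- (RInt f a a' + RInt f b' b)) by lra.
  rewrite Rabs_Ropp; eapply Rle_lt_trans; [apply Rabs_triang | lra].
Qed.

Lemma improper_integral_abs_le (f : R -> R) I K :
  filterlim (fun ab : R * R => RInt f (fst ab) (snd ab)) near_0_and_oo (locally I) ->
  (forall u v, 0 < u -> u <= v -> Rabs (RInt f u v) <= K) -> Rabs I <= K.
Proof.
  intros HI HK; apply Rabs_le.
  apply (closed_filterlim_loc (FF := Proper_StrongProper _ near_0_and_oo_proper) _
           (fun y => - K <= y <= K) I HI).
  - eapply filter_imp; [| apply (near_0_and_oo_interval 1 1); lra].
    intros [a b] [Ha Hb]; simpl in *; apply Rabs_le_between, HK; lra.
  - apply closed_and; [apply closed_ge | apply closed_le].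
Qed.

Lemma improper_int_0_oo_pair (f1 f2 : R -> R) I1 I2 :
  (forall x, 0 < x -> continuous f1 x /\ continuous f2 x) ->
  filterlim (fun ab : R * R => RInt f1 (fst ab) (snd ab)) near_0_and_oo (locally I1) ->
  filterlim (fun ab : R * R => RInt f2 (fst ab) (snd ab)) near_0_and_oo (locally I2) ->
  improper_int_0_oo (fun x => (f1 x, f2 x)) (I1, I2).
Proof.
  intros Hc H1 H2; unfold improper_int_0_oo, is_RInt_gen.
  apply (filterlimi_lim_ext_loc
           (fun ab : R * R => (RInt f1 (fst ab) (snd ab), RInt f2 (fst ab) (snd ab)))).
  - eapply filter_imp; [| apply (near_0_and_oo_interval 1 1); lra].
    intros [a b] [Ha Hb]; simpl in *.
    apply (is_RInt_fct_extend_pair (U := R_NormedModule) (V := R_NormedModule)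
             (fun x => (f1 x, f2 x))); simpl;
      apply (RInt_correct (V := R_CompleteNormedModule)), ex_RInt_continuous_on; try lra;
      intros x Hx; apply Hc; lra.
  - intros P [eps HP].
    apply (filterlim_pair _ _ H1 H2 (fun y => P y)).
    apply (Filter_prod _ _ _ (ball I1 eps) (ball I2 eps)); try apply locally_ball.
    intros x y Hx Hy; apply HP; split; auto.
Qed.

(* The real and imaginary parts are the cases [th = 0] and [th = - PI / 2]. *)
Lemma improper_int_0_oo_osc (ph g : R -> R) M K :
  (forall x, 0 < x -> continuous ph x /\ continuous g x) ->
  (forall x, 0 < x <= 1 -> Rabs (g x) <= M) ->
  (forall th eps, 0 < eps -> exists B, forall u v, B <= u -> u <= v ->
     Rabs (RInt (fun x => g x * cos (ph x + th)) u v) <= eps) ->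
  (forall th u v, 0 < u -> u <= v -> Rabs (RInt (fun x => g x * cos (ph x + th)) u v) <= K) ->
  exists I, improper_int_0_oo (osc ph g) I /\ Cmod I <= 2 * K.
Proof.
  intros Hc HM Htail HK.
  assert (Hcf : forall th x, 0 < x -> continuous (fun x => g x * cos (ph x + th)) x).
  { intros th x Hx; destruct (Hc x Hx); cont. }
  assert (Hlim : forall th, exists I,
    filterlim (fun ab : R * R => RInt (fun x => g x * cos (ph x + th)) (fst ab) (snd ab))
      near_0_and_oo (locally I) /\ Rabs I <= K).
  { intros th; destruct (improper_integral_cauchy (fun x => g x * cos (ph x + th))) as [I HI].
    - apply Hcf.
    - apply (cauchy_at_0_of_bounded _ M); [apply Hcf |].
      intros x Hx; rewrite Rabs_mult.
      assert (Rabs (cos (ph x + th)) <= 1) by (apply Rabs_le, COS_bound).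
      generalize (Rabs_pos (g x)) (Rabs_pos (cos (ph x + th))) (HM x Hx); intros; nra.
    - apply Htail.
    - exists I; split; auto; apply (improper_integral_abs_le _ _ K HI), HK. }
  destruct (Hlim 0) as [I1 [HI1 HK1]], (Hlim (- (PI / 2))) as [I2 [HI2 HK2]].
  exists (I1, I2); split.
  - eapply is_RInt_gen_ext; [| apply improper_int_0_oo_pair; [| exact HI1 | exact HI2]].
    + eapply filter_imp; [| apply (near_0_and_oo_interval 1 1); lra].
      intros [a b] [Ha Hb] x Hx; simpl in *.
      replace (ph x + - (PI / 2)) with (- (PI / 2 - ph x)) by ring.
      rewrite Rplus_0_r, cos_neg, cos_shift; reflexivity.
    + intros x Hx; split; apply Hcf; auto.
  - eapply Rle_trans; [apply Cmod_2Rmax |]; simpl.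
    assert (sqrt 2 <= 2).
    { rewrite <- (sqrt_square 2) at 2 by lra; apply sqrt_le_1_alt; lra. }
    assert (Rmax (Rabs I1) (Rabs I2) <= K) by (apply Rmax_lub; auto).
    generalize (Rmax_l (Rabs I1) (Rabs I2)) (Rabs_pos I1); intros; nra.
Qed.

(** * Finite sums *)

Lemma sum_1_0 (a : nat -> R) : sum_n_m a 1 0 = 0.
Proof. rewrite sum_n_m_zero by lia; reflexivity. Qed.

Lemma sum_1_S (a : nat -> R) m : sum_n_m a 1 (S m) = sum_n_m a 1 m + a (S m).
Proof. rewrite sum_n_Sm by lia; reflexivity. Qed.

Lemma sum_mult_l (a : nat -> R) c m : sum_n_m (fun j => c * a j) 1 m = c * sum_n_m a 1 m.
Proof. exact (sum_n_m_mult_l (K := R_Ring) c a 1 m). Qed.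

Lemma sum_ext_loc (a c : nat -> R) m :
  (forall j, (1 <= j <= m)%nat -> a j = c j) -> sum_n_m a 1 m = sum_n_m c 1 m.
Proof. intros H; apply sum_n_m_ext_loc; auto. Qed.

Lemma sum_le_loc (a c : nat -> R) m :
  (forall j, (1 <= j <= m)%nat -> a j <= c j) -> sum_n_m a 1 m <= sum_n_m c 1 m.
Proof.
  induction m as [| m IH]; intros H; [rewrite !sum_1_0; lra |].
  rewrite !sum_1_S; apply Rplus_le_compat; [apply IH; intros; apply H | apply H]; lia.
Qed.

Lemma sum_nonneg (a : nat -> R) m :
  (forall j, (1 <= j <= m)%nat -> 0 <= a j) -> 0 <= sum_n_m a 1 m.
Proof.
  intros H; apply Rle_trans with (sum_n_m (fun _ => 0) 1 m); [| apply sum_le_loc; auto].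
  rewrite sum_n_m_const; lra.
Qed.

Lemma term_le_sum (a : nat -> R) m k :
  (forall j, (1 <= j <= m)%nat -> 0 <= a j) -> (1 <= k <= m)%nat -> a k <= sum_n_m a 1 m.
Proof.
  induction m as [| m IH]; intros H Hk; [lia |].
  rewrite sum_1_S; destruct (Nat.eq_dec k (S m)) as [-> | Hne].
  - assert (0 <= sum_n_m a 1 m) by (apply sum_nonneg; intros; apply H; lia); lra.
  - assert (a k <= sum_n_m a 1 m) by (apply IH; [intros; apply H |]; lia).
    assert (0 <= a (S m)) by (apply H; lia); lra.
Qed.

Lemma exists_term_ge_mean (a : nat -> R) m c :
  (1 <= m)%nat -> INR m * c <= sum_n_m a 1 m -> exists j, (1 <= j <= m)%nat /\ c <= a j.
Proof.
  induction m as [| m IH]; intros Hm H; [lia |].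
  rewrite sum_1_S, S_INR in H.
  destruct (Rle_lt_dec c (a (S m))) as [Hc | Hc]; [exists (S m); split; auto; lia |].
  destruct m as [| m].
  - rewrite sum_1_0 in H; simpl in H; lra.
  - destruct IH as [j [Hj Hcj]]; [lia | lra |].
    exists j; split; auto; lia.
Qed.

Lemma is_derive_sum (f df : nat -> R -> R) m x :
  (forall j, (1 <= j <= m)%nat -> is_derive (f j) x (df j x)) ->
  is_derive (fun y => sum_n_m (fun j => f j y) 1 m) x (sum_n_m (fun j => df j x) 1 m).
Proof.
  induction m as [| m IH]; intros H.
  - apply (is_derive_ext (fun _ => 0)); [intros; rewrite sum_1_0; auto |].
    rewrite sum_1_0; auto_derive; reflexivity.
  - apply (is_derive_ext (fun y => sum_n_m (fun j => f j y) 1 m + f (S m) y));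
      [intros; rewrite sum_1_S; auto |].
    rewrite sum_1_S; apply (is_derive_plus (fun y => sum_n_m (fun j => f j y) 1 m) (f (S m)));
      [apply IH; intros; apply H | apply H]; lia.
Qed.

Lemma continuous_sum (f : nat -> R -> R) m x :
  (forall j, (1 <= j <= m)%nat -> continuous (f j) x) ->
  continuous (fun y => sum_n_m (fun j => f j y) 1 m) x.
Proof.
  induction m as [| m IH]; intros H.
  - apply (continuous_ext (fun _ => 0)); [intros; rewrite sum_1_0; auto | apply continuous_const].
  - apply (continuous_ext (fun y => sum_n_m (fun j => f j y) 1 m + f (S m) y));
      [intros; rewrite sum_1_S; auto |].
    apply (cont_plus (fun y => sum_n_m (fun j => f j y) 1 m) (f (S m)));
      [apply IH; intros; apply H | apply H]; lia.
Qed.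

Lemma max_1n_ge (b : nat -> R) m j : (1 <= j <= m)%nat -> b j <= max_1n b m.
Proof.
  induction m as [| m IH]; intros Hj; [lia |]; simpl.
  destruct (Nat.eq_dec j (S m)) as [-> | Hne]; [apply Rmax_r |].
  eapply Rle_trans; [apply IH; lia | apply Rmax_l].
Qed.

Lemma nonincreasing_seq_le (sigma : nat -> R) m :
  (forall j, (1 <= j < m)%nat -> sigma (S j) <= sigma j) ->
  forall i j, (1 <= i <= j)%nat -> (j <= m)%nat -> sigma j <= sigma i.
Proof.
  intros H i j Hij Hjm; induction j as [| j IH]; [lia |].
  destruct (Nat.eq_dec i (S j)) as [-> | Hne]; [lra |].
  eapply Rle_trans; [apply H; lia | apply IH; lia].
Qed.

(** * The phase *)

Lemma sq_plus_nonneg_pos x t : 0 < x -> 0 <= t -> 0 < x ^ 2 + t.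
Proof. intros; nra. Qed.

Definition inv_sqrt_sum (m : nat) (b sg : nat -> R) (x : R) :=
  sum_n_m (fun j => b j / sqrt (x ^ 2 + sg j)) 1 m.

Definition inv_sqrt3_sum (m : nat) (b sg : nat -> R) (x : R) :=
  sum_n_m (fun j => b j / ((x ^ 2 + sg j) * sqrt (x ^ 2 + sg j))) 1 m.

(* [phase' x = x * phase_factor x]. *)
Definition phase_factor (s : R) (m : nat) (b sg : nat -> R) (x : R) :=
  1 + s * inv_sqrt_sum m b sg x.

Definition phase_factor' (s : R) (m : nat) (b sg : nat -> R) (x : R) :=
  - s * (x * inv_sqrt3_sum m b sg x).

Section Phase.

Variables (m : nat) (b sg : nat -> R).
Hypothesis sg_nonneg : forall j, (1 <= j <= m)%nat -> 0 <= sg j.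
Hypothesis b_pos : forall j, (1 <= j <= m)%nat -> 0 < b j.

Let sq_pos x j : 0 < x -> (1 <= j <= m)%nat -> 0 < x ^ 2 + sg j.
Proof. intros; apply sq_plus_nonneg_pos; auto. Qed.

Let sqrt_sq_pos x j : 0 < x -> (1 <= j <= m)%nat -> 0 < sqrt (x ^ 2 + sg j).
Proof. intros; apply sqrt_lt_R0, sq_pos; auto. Qed.

Lemma inv_sqrt_sum_nonneg x : 0 < x -> 0 <= inv_sqrt_sum m b sg x.
Proof.
  intros Hx; apply sum_nonneg; intros j Hj.
  apply Rdiv_le_0_compat; [left | apply sqrt_sq_pos]; auto.
Qed.

Lemma inv_sqrt3_sum_nonneg x : 0 < x -> 0 <= inv_sqrt3_sum m b sg x.
Proof.
  intros Hx; apply sum_nonneg; intros j Hj.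
  apply Rdiv_le_0_compat; [left; auto | apply Rmult_lt_0_compat; auto].
Qed.

Lemma phase_derive s x : 0 < x -> is_derive (phase s m b sg) x (x * phase_factor s m b sg x).
Proof.
  intros Hx; unfold phase, phase_factor, inv_sqrt_sum.
  replace (x * (1 + s * sum_n_m (fun j => b j / sqrt (x ^ 2 + sg j)) 1 m))
    with (x + s * sum_n_m (fun j => b j * x / sqrt (x ^ 2 + sg j)) 1 m).
  2:{ rewrite (sum_ext_loc (fun j => b j * x / sqrt (x ^ 2 + sg j))
                            (fun j => x * (b j / sqrt (x ^ 2 + sg j))))
        by (intros; unfold Rdiv; ring).
      rewrite sum_mult_l; ring. }
  apply (is_derive_plus (fun y => y ^ 2 / 2)); [auto_derive; auto; field |].
  apply (is_derive_scal (fun y => sum_n_m (fun j => b j * sqrt (y ^ 2 + sg j)) 1 m) x s).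
  apply (is_derive_sum (fun j y => b j * sqrt (y ^ 2 + sg j))
                       (fun j y => b j * y / sqrt (y ^ 2 + sg j))).
  intros j Hj; generalize (sq_pos x j Hx Hj) (sqrt_sq_pos x j Hx Hj); intros.
  auto_derive; replace (x * (x * 1)) with (x ^ 2) by ring; [lra | field; lra].
Qed.

Lemma phase_factor_derive s x :
  0 < x -> is_derive (phase_factor s m b sg) x (phase_factor' s m b sg x).
Proof.
  intros Hx; unfold phase_factor, phase_factor', inv_sqrt_sum, inv_sqrt3_sum.
  replace (- s * (x * sum_n_m (fun j => b j / ((x ^ 2 + sg j) * sqrt (x ^ 2 + sg j))) 1 m))
    with (0 + s * sum_n_m (fun j => - (b j * x) / ((x ^ 2 + sg j) * sqrt (x ^ 2 + sg j))) 1 m).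
  2:{ rewrite (sum_ext_loc (fun j => - (b j * x) / ((x ^ 2 + sg j) * sqrt (x ^ 2 + sg j)))
                 (fun j => - x * (b j / ((x ^ 2 + sg j) * sqrt (x ^ 2 + sg j)))))
        by (intros; unfold Rdiv; ring).
      rewrite sum_mult_l; ring. }
  apply (is_derive_plus (fun _ => 1)); [auto_derive; auto |].
  apply (is_derive_scal (fun y => sum_n_m (fun j => b j / sqrt (y ^ 2 + sg j)) 1 m) x s).
  apply (is_derive_sum (fun j y => b j / sqrt (y ^ 2 + sg j))
           (fun j y => - (b j * y) / ((y ^ 2 + sg j) * sqrt (y ^ 2 + sg j)))).
  intros j Hj; generalize (sq_pos x j Hx Hj) (sqrt_sq_pos x j Hx Hj); intros.
  assert (Hq : sqrt (x ^ 2 + sg j) * sqrt (x ^ 2 + sg j) = x ^ 2 + sg j) by (apply sqrt_sqrt; lra).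
  auto_derive; replace (x * (x * 1)) with (x ^ 2) by ring; [repeat split; lra |].
  set (q := sqrt (x ^ 2 + sg j)) in *; rewrite <- Hq; field; lra.
Qed.

Lemma phase_factor_cont s x : 0 < x -> continuous (phase_factor s m b sg) x.
Proof. intros; eapply is_derive_continuous, phase_factor_derive; auto. Qed.

Lemma phase_factor'_cont s x : 0 < x -> continuous (phase_factor' s m b sg) x.
Proof.
  intros Hx; unfold phase_factor', inv_sqrt3_sum.
  apply (cont_mult (fun _ => - s)); [apply continuous_const |].
  apply cont_mult; [apply continuous_id |].
  apply (continuous_sum (fun j y => b j / ((y ^ 2 + sg j) * sqrt (y ^ 2 + sg j)))).
  intros j Hj; generalize (sq_pos x j Hx Hj) (sqrt_sq_pos x j Hx Hj); intros.
  cont; apply Rgt_not_eq, Rmult_lt_0_compat; auto.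
Qed.

Lemma phase_factor'_one_signed s u v : 0 < u -> one_signed (phase_factor' s m b sg) u v.
Proof.
  intros Hu; destruct (Rle_or_lt 0 s); [right | left]; intros x Hx; unfold phase_factor';
    assert (0 <= inv_sqrt3_sum m b sg x) by (apply inv_sqrt3_sum_nonneg; lra);
    assert (0 <= x * inv_sqrt3_sum m b sg x) by (apply Rmult_le_pos; lra); nra.
Qed.

Lemma phase_factor_nondecreasing x y :
  0 < x -> x <= y -> phase_factor (-1) m b sg x <= phase_factor (-1) m b sg y.
Proof.
  intros Hx Hxy; apply (nondecreasing_of_derive_nonneg _ (phase_factor' (-1) m b sg) x y); try lra.
  - intros; apply phase_factor_derive; lra.
  - intros; apply phase_factor'_cont; lra.
  - intros z Hz; unfold phase_factor'.
    assert (0 <= inv_sqrt3_sum m b sg z) by (apply inv_sqrt3_sum_nonneg; lra); nra.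
Qed.

Lemma phase_factor_ge_half s x :
  (s = 1 \/ s = -1) -> 0 < x -> 2 * sum_n_m b 1 m <= x -> 1 / 2 <= phase_factor s m b sg x.
Proof.
  intros Hs Hx Hb; assert (H0 := inv_sqrt_sum_nonneg x Hx).
  destruct Hs as [-> | ->]; unfold phase_factor; [lra |].
  assert (inv_sqrt_sum m b sg x <= / x * sum_n_m b 1 m).
  { rewrite <- sum_mult_l; apply sum_le_loc; intros j Hj.
    unfold Rdiv; rewrite (Rmult_comm (/ x)).
    apply Rmult_le_compat_l; [left; auto | apply Rinv_le_contravar; auto].
    rewrite <- (sqrt_pow2 x) at 1 by lra; apply sqrt_le_1_alt.
    generalize (sg_nonneg j Hj); lra. }
  assert (/ x * sum_n_m b 1 m <= 1 / 2).
  { apply Rmult_le_reg_l with x; auto; rewrite <- Rmult_assoc, Rinv_r; lra. }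
  lra.
Qed.

Lemma inv_sqrt_sum_term_le k x :
  (1 <= k <= m)%nat -> 0 < x -> b k / sqrt (x ^ 2 + sg k) <= inv_sqrt_sum m b sg x.
Proof.
  intros Hk Hx; apply (term_le_sum (fun j => b j / sqrt (x ^ 2 + sg j))); auto.
  intros j Hj; apply Rdiv_le_0_compat; [left | apply sqrt_sq_pos]; auto.
Qed.

Lemma inv_sqrt_term_le_2 k x :
  (1 <= k <= m)%nat -> 0 < x -> -1 <= phase_factor (-1) m b sg x ->
  b k / sqrt (x ^ 2 + sg k) <= 2.
Proof.
  intros Hk Hx Hh; unfold phase_factor in Hh.
  generalize (inv_sqrt_sum_term_le k x Hk Hx); lra.
Qed.

Section Largest_sigma_first.

Hypothesis sg_le_sg1 : forall j, (1 <= j <= m)%nat -> sg j <= sg 1%nat.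
Hypothesis sg1_nonneg : 0 <= sg 1%nat.

Lemma inv_sqrt3_sum_ge x :
  0 < x -> x ^ 2 / (x ^ 2 + sg 1%nat) * inv_sqrt_sum m b sg x <= x ^ 2 * inv_sqrt3_sum m b sg x.
Proof.
  intros Hx; unfold inv_sqrt_sum, inv_sqrt3_sum; rewrite <- !sum_mult_l.
  apply sum_le_loc; intros j Hj.
  generalize (sq_pos x j Hx Hj) (sqrt_sq_pos x j Hx Hj); intros.
  assert (0 < x ^ 2 + sg 1%nat) by (apply sq_plus_nonneg_pos; auto).
  assert (/ (x ^ 2 + sg 1%nat) <= / (x ^ 2 + sg j))
    by (apply Rinv_le_contravar; auto; generalize (sg_le_sg1 j Hj); lra).
  assert (0 <= b j / sqrt (x ^ 2 + sg j) * x ^ 2).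
  { apply Rmult_le_pos; [apply Rdiv_le_0_compat; [left; auto | auto] | nra]. }
  replace (x ^ 2 / (x ^ 2 + sg 1%nat) * (b j / sqrt (x ^ 2 + sg j)))
    with (b j / sqrt (x ^ 2 + sg j) * x ^ 2 * / (x ^ 2 + sg 1%nat)) by (field; lra).
  replace (x ^ 2 * (b j / ((x ^ 2 + sg j) * sqrt (x ^ 2 + sg j))))
    with (b j / sqrt (x ^ 2 + sg j) * x ^ 2 * / (x ^ 2 + sg j)) by (field; lra).
  apply Rmult_le_compat_l; auto.
Qed.

(* [phase_factor + x * phase_factor'] is [phase'']; by [inv_sqrt3_sum_ge] it is at
   least [1 - (1 - t) S] with [S = inv_sqrt_sum] and [t = x^2 / (x^2 + sg 1)]. *)
Lemma phase_factor_mul_derive_ge x mu :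
  0 < x -> 0 < mu -> mu <= x ^ 2 / (x ^ 2 + sg 1%nat) ->
  - (mu / 2) <= phase_factor (-1) m b sg x ->
  mu / 2 <= phase_factor (-1) m b sg x + x * phase_factor' (-1) m b sg x.
Proof.
  intros Hx Hmu Ht Hh.
  assert (HS := inv_sqrt_sum_nonneg x Hx).
  assert (HS3 := inv_sqrt3_sum_ge x Hx).
  assert (0 < x ^ 2 + sg 1%nat) by (apply sq_plus_nonneg_pos; auto).
  assert (Ht1 : x ^ 2 / (x ^ 2 + sg 1%nat) <= 1).
  { apply Rmult_le_reg_r with (x ^ 2 + sg 1%nat); auto; field_simplify; lra. }
  set (t := x ^ 2 / (x ^ 2 + sg 1%nat)) in *.
  unfold phase_factor, phase_factor' in *.
  replace (1 + -1 * inv_sqrt_sum m b sg x + x * (- -1 * (x * inv_sqrt3_sum m b sg x)))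
    with (1 - inv_sqrt_sum m b sg x + x ^ 2 * inv_sqrt3_sum m b sg x) by ring.
  destruct (Rle_lt_dec (inv_sqrt_sum m b sg x) 1); nra.
Qed.

End Largest_sigma_first.

(* If [phase_factor <= 1/2], one of the [m] terms of [inv_sqrt_sum] is at least
   [1 / (2 m)], and its cube over [b j ^ 2] bounds [inv_sqrt3_sum] from below. *)
Lemma phase_factor'_ge x :
  (1 <= m)%nat -> 0 < x -> phase_factor (-1) m b sg x <= 1 / 2 ->
  / (8 * INR m ^ 3 * max_1n b m ^ 2) * x <= phase_factor' (-1) m b sg x.
Proof.
  intros Hm Hx Hh; unfold phase_factor in Hh; unfold phase_factor'.
  set (n := INR m); set (M := max_1n b m).
  assert (Hn : 1 <= n) by (apply (le_INR 1); lia).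
  assert (Hmean : n * / (2 * n) <= inv_sqrt_sum m b sg x)
    by (replace (n * / (2 * n)) with (1 / 2) by (field; lra); lra).
  destruct (exists_term_ge_mean _ m _ Hm Hmean) as [j [Hj Hyj]].
  generalize (b_pos j Hj) (max_1n_ge b m j Hj) (sq_pos x j Hx Hj) (sqrt_sq_pos x j Hx Hj).
  fold M; intros Hbj HbM Hv Hsq.
  assert (Hsq2 : sqrt (x ^ 2 + sg j) * sqrt (x ^ 2 + sg j) = x ^ 2 + sg j)
    by (apply sqrt_sqrt; lra).
  set (y := b j / sqrt (x ^ 2 + sg j)) in *.
  assert (Hterm : b j / ((x ^ 2 + sg j) * sqrt (x ^ 2 + sg j)) = y ^ 3 / b j ^ 2).
  { unfold y; set (q := sqrt (x ^ 2 + sg j)) in *; rewrite <- Hsq2; field; lra. }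
  assert (HS3 : b j / ((x ^ 2 + sg j) * sqrt (x ^ 2 + sg j)) <= inv_sqrt3_sum m b sg x).
  { apply (term_le_sum (fun j => b j / ((x ^ 2 + sg j) * sqrt (x ^ 2 + sg j)))); auto.
    intros i Hi; generalize (sq_pos x i Hx Hi) (sqrt_sq_pos x i Hx Hi); intros.
    apply Rdiv_le_0_compat; [left; auto | apply Rmult_lt_0_compat; auto]. }
  assert (Hy0 : 0 < / (2 * n)) by (apply Rinv_0_lt_compat; lra).
  assert (Hy3 : (/ (2 * n)) ^ 3 <= y ^ 3) by (apply pow_incr; lra).
  assert (HM2 : / M ^ 2 <= / b j ^ 2) by (apply Rinv_le_contravar; [nra | apply pow_incr; lra]).
  assert (Hc : / (8 * n ^ 3 * M ^ 2) <= y ^ 3 / b j ^ 2).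
  { replace (/ (8 * n ^ 3 * M ^ 2)) with ((/ (2 * n)) ^ 3 * / M ^ 2) by (field; split; nra).
    unfold Rdiv; apply Rmult_le_compat; try lra; [apply pow_le; lra |].
    left; apply Rinv_0_lt_compat; nra. }
  replace (- -1 * (x * inv_sqrt3_sum m b sg x)) with (inv_sqrt3_sum m b sg x * x) by ring.
  apply Rmult_le_compat_r; lra.
Qed.

End Phase.

(** * The amplitude *)

Definition amplitude (tau : R) (om : R -> R) (x : R) := x / sqrt (x ^ 2 + tau) * om x.

Definition inv_sqrt_shift (tau x : R) := / sqrt (x ^ 2 + tau).
Definition inv_sqrt_shift' (tau x : R) := - x / ((x ^ 2 + tau) * sqrt (x ^ 2 + tau)).
Definition ratio_sqrt_shift (tau x : R) := x / sqrt (x ^ 2 + tau).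
Definition ratio_sqrt_shift' (tau x : R) := tau / ((x ^ 2 + tau) * sqrt (x ^ 2 + tau)).

Section Shift_factors.

Variable tau : R.
Hypothesis tau_nonneg : 0 <= tau.

Let sq_pos x : 0 < x -> 0 < x ^ 2 + tau.
Proof. intros; apply sq_plus_nonneg_pos; auto. Qed.
Let sqrt_pos x : 0 < x -> 0 < sqrt (x ^ 2 + tau).
Proof. intros; apply sqrt_lt_R0, sq_pos; auto. Qed.
Let sqrt_sq x : 0 < x -> sqrt (x ^ 2 + tau) * sqrt (x ^ 2 + tau) = x ^ 2 + tau.
Proof. intros; apply sqrt_sqrt; generalize (sq_pos x); lra. Qed.
Let le_sqrt x : 0 < x -> x <= sqrt (x ^ 2 + tau).
Proof. intros; rewrite <- (sqrt_pow2 x) at 1 by lra; apply sqrt_le_1_alt; lra. Qed.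

Lemma inv_sqrt_shift_derive x : 0 < x -> is_derive (inv_sqrt_shift tau) x (inv_sqrt_shift' tau x).
Proof.
  intros Hx; unfold inv_sqrt_shift, inv_sqrt_shift'.
  generalize (sq_pos x Hx) (sqrt_pos x Hx) (sqrt_sq x Hx); intros.
  auto_derive; replace (x * (x * 1)) with (x ^ 2) by ring; [repeat split; lra |].
  set (q := sqrt (x ^ 2 + tau)) in *; rewrite <- H1; field; lra.
Qed.

Lemma ratio_sqrt_shift_derive x :
  0 < x -> is_derive (ratio_sqrt_shift tau) x (ratio_sqrt_shift' tau x).
Proof.
  intros Hx; unfold ratio_sqrt_shift, ratio_sqrt_shift'.
  generalize (sq_pos x Hx) (sqrt_pos x Hx) (sqrt_sq x Hx); intros.
  auto_derive; replace (x * (x * 1)) with (x ^ 2) by ring; [repeat split; lra |].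
  set (q := sqrt (x ^ 2 + tau)) in *.
  replace tau with (q * q - x ^ 2) by lra.
  field; split; [lra |]; replace (x ^ 2 + (q * q - x ^ 2)) with (q * q) by ring; nra.
Qed.

Lemma inv_sqrt_shift'_cont x : 0 < x -> continuous (inv_sqrt_shift' tau) x.
Proof.
  intros Hx; unfold inv_sqrt_shift'; generalize (sq_pos x Hx) (sqrt_pos x Hx); intros.
  cont; apply Rgt_not_eq, Rmult_lt_0_compat; auto.
Qed.

Lemma ratio_sqrt_shift'_cont x : 0 < x -> continuous (ratio_sqrt_shift' tau) x.
Proof.
  intros Hx; unfold ratio_sqrt_shift'; generalize (sq_pos x Hx) (sqrt_pos x Hx); intros.
  cont; apply Rgt_not_eq, Rmult_lt_0_compat; auto.
Qed.

Lemma inv_sqrt_shift'_one_signed u v : 0 < u -> one_signed (inv_sqrt_shift' tau) u v.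
Proof.
  intros Hu; right; intros x Hx; unfold inv_sqrt_shift'.
  generalize (sq_pos x ltac:(lra)) (sqrt_pos x ltac:(lra)); intros.
  unfold Rdiv; apply Rmult_le_0_r; [lra | left; apply Rinv_0_lt_compat, Rmult_lt_0_compat; auto].
Qed.

Lemma ratio_sqrt_shift'_one_signed u v : 0 < u -> one_signed (ratio_sqrt_shift' tau) u v.
Proof.
  intros Hu; left; intros x Hx; unfold ratio_sqrt_shift'.
  generalize (sq_pos x ltac:(lra)) (sqrt_pos x ltac:(lra)); intros.
  apply Rdiv_le_0_compat; auto; apply Rmult_lt_0_compat; auto.
Qed.

Lemma inv_sqrt_shift_bounds x : 0 < x -> 0 < inv_sqrt_shift tau x <= / x.
Proof.
  intros Hx; unfold inv_sqrt_shift; split.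
  - apply Rinv_0_lt_compat, sqrt_pos; auto.
  - apply Rinv_le_contravar, le_sqrt; auto.
Qed.

Lemma ratio_sqrt_shift_bounds x : 0 < x -> 0 <= ratio_sqrt_shift tau x <= 1.
Proof.
  intros Hx; unfold ratio_sqrt_shift; generalize (sqrt_pos x Hx) (le_sqrt x Hx); intros.
  split; [apply Rdiv_le_0_compat; lra |].
  apply Rmult_le_reg_r with (sqrt (x ^ 2 + tau)); auto; field_simplify; lra.
Qed.

Lemma amplitude_eq_inv x om : 0 < x -> amplitude tau om x = x * (om x * inv_sqrt_shift tau x).
Proof.
  intros Hx; unfold amplitude, inv_sqrt_shift; field; apply Rgt_not_eq, sqrt_pos; auto.
Qed.

Lemma amplitude_eq_ratio x om : amplitude tau om x = 1 * (om x * ratio_sqrt_shift tau x).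
Proof. unfold amplitude, ratio_sqrt_shift; ring. Qed.

End Shift_factors.

(** * Estimates of the oscillatory integrals *)

Lemma inv_sqrt_le mu c : 0 < mu -> 0 <= c -> / mu <= c ^ 2 -> / sqrt mu <= c.
Proof.
  intros Hmu Hc H; rewrite <- sqrt_inv, <- (sqrt_pow2 c) by auto.
  apply sqrt_le_1_alt; auto.
Qed.

Lemma Rpower_quarter x : 0 < x -> Rpower x (1 / 4) = sqrt (sqrt x).
Proof.
  intros Hx; replace (1 / 4) with (/ 2 * / 2) by field.
  rewrite <- Rpower_mult, (Rpower_sqrt x Hx); apply Rpower_sqrt, sqrt_lt_R0; auto.
Qed.

Lemma Rpower_three_halves x : 0 < x -> Rpower x (3 / 2) = x * sqrt x.
Proof.
  intros Hx; replace (3 / 2) with (1 + / 2) by field.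
  rewrite Rpower_plus, Rpower_1, Rpower_sqrt; auto.
Qed.

Lemma one_le_Rpower x y : 1 <= x -> 0 <= y -> 1 <= Rpower x y.
Proof. intros Hx Hy; rewrite <- (Rpower_O x) by lra; apply Rle_Rpower; auto. Qed.

Section Oscillatory_integral.

Variables (a0 : R) (om : R -> R).
Hypothesis om_ex_derive : forall x, 0 < x -> ex_derive om x.
Hypothesis om'_ex_derive : forall x, 0 < x -> ex_derive (Derive om) x.
Hypothesis om_monotone :
  (forall x y, 0 < x -> x <= y -> om x <= om y) \/ (forall x y, 0 < x -> x <= y -> om y <= om x).
Hypothesis om_bounds : forall x, 0 < x -> 0 <= om x <= a0.

Variables (m : nat) (b sg : nat -> R).
Hypothesis sg_nonneg : forall j, (1 <= j <= m)%nat -> 0 <= sg j.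
Hypothesis b_pos : forall j, (1 <= j <= m)%nat -> 0 < b j.

Local Notation osc_cos s tau th :=
  (fun x => amplitude tau om x * cos (phase s m b sg x + th)).

Let om_derive x : 0 < x -> is_derive om x (Derive om x).
Proof. intros; apply Derive_correct; auto. Qed.
Let om_cont x : 0 < x -> continuous om x.
Proof. intros; apply (ex_derive_continuous (V := R_NormedModule)); auto. Qed.
Let om'_cont x : 0 < x -> continuous (Derive om) x.
Proof. intros; apply (ex_derive_continuous (V := R_NormedModule)); auto. Qed.
Let a0_nonneg : 0 <= a0.
Proof. destruct (om_bounds 1); lra. Qed.

Lemma variation_om_mult_le (f f' : R -> R) u v Q :
  0 < u -> u <= v ->
  (forall x, u <= x <= v -> is_derive f x (f' x)) -> (forall x, u <= x <= v -> continuous f' x) ->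
  one_signed f' u v -> (forall x, u <= x <= v -> 0 <= f x <= Q) ->
  RInt (fun x => Rabs (Derive om x * f x + om x * f' x)) u v <= 2 * a0 * Q.
Proof.
  intros Hu Huv Hf Hcf' Hs HQ.
  apply RInt_abs_derive_mult_le; auto.
  - intros; apply om_derive; lra.
  - intros; apply om'_cont; lra.
  - apply one_signed_derive_of_monotone; auto; intros; apply om_ex_derive; lra.
  - intros; apply om_bounds; lra.
Qed.

Lemma amplitude_abs_le tau x : 0 <= tau -> 0 < x -> Rabs (amplitude tau om x) <= a0.
Proof.
  intros Ht Hx; rewrite amplitude_eq_ratio, Rmult_1_l.
  destruct (om_bounds x Hx), (ratio_sqrt_shift_bounds tau Ht x Hx).
  rewrite Rabs_pos_eq by (apply Rmult_le_pos; lra); nra.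
Qed.

Lemma amplitude_cont tau x : 0 <= tau -> 0 < x -> continuous (amplitude tau om) x.
Proof.
  intros Ht Hx; unfold amplitude.
  assert (0 < sqrt (x ^ 2 + tau)) by (apply sqrt_lt_R0, sq_plus_nonneg_pos; auto).
  cont; lra.
Qed.

Lemma phase_cont s x : 0 < x -> continuous (phase s m b sg) x.
Proof. intros; eapply is_derive_continuous, phase_derive; auto. Qed.

Lemma osc_cos_cont s tau th x : 0 <= tau -> 0 < x -> continuous (osc_cos s tau th) x.
Proof.
  intros Ht Hx; generalize (amplitude_cont tau x Ht Hx) (phase_cont s x Hx); intros; cont.
Qed.

Lemma osc_cos_trivial_bound s tau th u v :
  0 <= tau -> 0 < u -> u <= v -> Rabs (RInt (osc_cos s tau th) u v) <= (v - u) * a0.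
Proof.
  intros Ht Hu Huv; apply abs_RInt_le_const; auto.
  - apply ex_RInt_continuous_on; auto; intros; apply osc_cos_cont; auto; lra.
  - intros x Hx; rewrite Rabs_mult.
    assert (Rabs (cos (phase s m b sg x + th)) <= 1) by (apply Rabs_le, COS_bound).
    generalize (amplitude_abs_le tau x Ht ltac:(lra)) (Rabs_pos (amplitude tau om x))
      (Rabs_pos (cos (phase s m b sg x + th))); intros; nra.
Qed.

Lemma om_mult_derive (f f' : R -> R) x :
  0 < x -> is_derive f x (f' x) ->
  is_derive (fun y => om y * f y) x (Derive om x * f x + om x * f' x).
Proof.
  intros Hx Hf; apply (is_derive_mult om f); auto; intros; apply Rmult_comm.
Qed.

Lemma om_mult_derive_cont (f f' : R -> R) x :
  0 < x -> is_derive f x (f' x) -> continuous f' x ->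
  continuous (fun y => Derive om y * f y + om y * f' y) x.
Proof. intros Hx Hf Hf'; generalize (is_derive_continuous f x _ Hf); intros; cont. Qed.

Lemma om_inv_sqrt_shift_abs_le tau x Q :
  0 <= tau -> 0 < x -> inv_sqrt_shift tau x <= Q ->
  Rabs (om x * inv_sqrt_shift tau x) <= a0 * Q.
Proof.
  intros Ht Hx HQ; destruct (om_bounds x Hx), (inv_sqrt_shift_bounds tau Ht x Hx).
  rewrite Rabs_pos_eq by (apply Rmult_le_pos; lra); apply Rmult_le_compat; lra.
Qed.

Lemma om_inv_sqrt_shift_variation tau u v Q :
  0 <= tau -> 0 < u -> u <= v -> (forall x, u <= x <= v -> inv_sqrt_shift tau x <= Q) ->
  RInt (fun x => Rabs (Derive om x * inv_sqrt_shift tau x + om x * inv_sqrt_shift' tau x)) u v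
    <= 2 * a0 * Q.
Proof.
  intros Ht Hu Huv HQ; apply variation_om_mult_le; auto.
  - intros; apply inv_sqrt_shift_derive; auto; lra.
  - intros; apply inv_sqrt_shift'_cont; auto; lra.
  - apply inv_sqrt_shift'_one_signed; auto.
  - intros x Hx; destruct (inv_sqrt_shift_bounds tau Ht x ltac:(lra)); split; [lra | auto].
Qed.

Lemma osc_first_derivative_bound s tau th u v d Q :
  0 <= tau -> 0 < u -> u <= v -> 0 < d ->
  away_from_zero (phase_factor s m b sg) d u v ->
  (forall x, u <= x <= v -> inv_sqrt_shift tau x <= Q) ->
  Rabs (RInt (osc_cos s tau th) u v) <= 5 * a0 * Q / d.
Proof.
  intros Ht Hu Huv Hd Hh HQ.
  rewrite (RInt_ext _ (fun x => x * (om x * inv_sqrt_shift tau x) * cos (phase s m b sg x + th)))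
    by (intros x Hx; rewrite Rmin_left, Rmax_right in Hx by lra;
        rewrite amplitude_eq_inv by (auto; lra); reflexivity).
  replace (5 * a0 * Q / d) with ((3 * (a0 * Q) + 2 * a0 * Q) / d) by (field; lra).
  apply (first_derivative_test (phase s m b sg) (fun x => x) (phase_factor s m b sg)
           (phase_factor' s m b sg) _ (fun x => Derive om x * inv_sqrt_shift tau x
                                               + om x * inv_sqrt_shift' tau x) u v);
    try lra; auto.
  - intros; apply phase_derive; auto; lra.
  - intros; apply phase_factor_derive; auto; lra.
  - intros; apply om_mult_derive, inv_sqrt_shift_derive; auto; lra.
  - intros; apply continuous_id.
  - intros; apply phase_factor'_cont; auto; lra.
  - intros; apply om_mult_derive_cont;
      [| apply inv_sqrt_shift_derive | apply inv_sqrt_shift'_cont]; auto; lra.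
  - apply phase_factor'_one_signed; auto.
  - intros; apply om_inv_sqrt_shift_abs_le; auto; lra.
  - apply om_inv_sqrt_shift_variation; auto.
Qed.

Lemma osc_second_derivative_bound_factor' s tau th u v mu Q :
  0 <= tau -> 0 < u -> u <= v -> 0 < mu ->
  (forall x, u <= x <= v -> mu * x <= phase_factor' s m b sg x) ->
  (forall x, u <= x <= v -> inv_sqrt_shift tau x <= Q) ->
  Rabs (RInt (osc_cos s tau th) u v) <= 12 * a0 * Q / sqrt mu.
Proof.
  intros Ht Hu Huv Hmu Hh HQ.
  rewrite (RInt_ext _ (fun x => x * (om x * inv_sqrt_shift tau x) * cos (phase s m b sg x + th)))
    by (intros x Hx; rewrite Rmin_left, Rmax_right in Hx by lra;
        rewrite amplitude_eq_inv by (auto; lra); reflexivity).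
  replace (12 * a0 * Q / sqrt mu) with ((8 * (a0 * Q) + 2 * (2 * a0 * Q)) / sqrt mu)
    by (field; apply Rgt_not_eq, sqrt_lt_R0; lra).
  apply (second_derivative_test (phase s m b sg) (fun x => x) (phase_factor s m b sg)
           (phase_factor' s m b sg) _ (fun x => Derive om x * inv_sqrt_shift tau x
                                               + om x * inv_sqrt_shift' tau x) u v);
    try lra; auto.
  - intros; apply phase_derive; auto; lra.
  - intros; apply phase_factor_derive; auto; lra.
  - intros; apply om_mult_derive, inv_sqrt_shift_derive; auto; lra.
  - intros; apply continuous_id.
  - intros; apply phase_factor'_cont; auto; lra.
  - intros; apply om_mult_derive_cont;
      [| apply inv_sqrt_shift_derive | apply inv_sqrt_shift'_cont]; auto; lra.
  - intros; lra.
  - intros; apply om_inv_sqrt_shift_abs_le; auto; lra.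
  - apply om_inv_sqrt_shift_variation; auto.
Qed.

Lemma osc_second_derivative_bound s tau th u v mu :
  0 <= tau -> 0 < u -> u <= v -> 0 < mu ->
  (forall x, u <= x <= v -> mu <= phase_factor s m b sg x + x * phase_factor' s m b sg x) ->
  Rabs (RInt (osc_cos s tau th) u v) <= 12 * a0 / sqrt mu.
Proof.
  intros Ht Hu Huv Hmu Hh.
  rewrite (RInt_ext _ (fun x => 1 * (om x * ratio_sqrt_shift tau x) * cos (phase s m b sg x + th)))
    by (intros; rewrite amplitude_eq_ratio; reflexivity).
  replace (12 * a0 / sqrt mu) with ((8 * (a0 * 1) + 2 * (2 * a0 * 1)) / sqrt mu)
    by (field; apply Rgt_not_eq, sqrt_lt_R0; lra).
  apply (second_derivative_test (phase s m b sg) (fun _ => 1) (fun x => x * phase_factor s m b sg x)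
           (fun x => phase_factor s m b sg x + x * phase_factor' s m b sg x) _
           (fun x => Derive om x * ratio_sqrt_shift tau x + om x * ratio_sqrt_shift' tau x) u v);
    try lra; auto.
  - intros; rewrite Rmult_1_l; apply phase_derive; auto; lra.
  - intros x Hx; apply (is_derive_ext (fun y => y * phase_factor s m b sg y)); [reflexivity |].
    replace (phase_factor s m b sg x + x * phase_factor' s m b sg x)
      with (1 * phase_factor s m b sg x + x * phase_factor' s m b sg x) by ring.
    apply (is_derive_mult (fun y => y) (phase_factor s m b sg));
      [apply (is_derive_id (K := R_AbsRing)) | apply phase_factor_derive; auto; lra |].
    intros; apply Rmult_comm.
  - intros; apply om_mult_derive, ratio_sqrt_shift_derive; auto; lra.
  - intros; apply continuous_const.
  - intros x Hx.
    assert (continuous (phase_factor s m b sg) x) by (apply phase_factor_cont; auto; lra).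
    assert (continuous (phase_factor' s m b sg) x) by (apply phase_factor'_cont; auto; lra).
    cont.
  - intros; apply om_mult_derive_cont;
      [| apply ratio_sqrt_shift_derive | apply ratio_sqrt_shift'_cont]; auto; lra.
  - intros; lra.
  - intros x Hx; rewrite Rmult_1_r; auto.
  - intros x Hx; destruct (om_bounds x ltac:(lra)), (ratio_sqrt_shift_bounds tau Ht x ltac:(lra)).
    rewrite Rabs_pos_eq by (apply Rmult_le_pos; lra); nra.
  - apply variation_om_mult_le; auto.
    + intros; apply ratio_sqrt_shift_derive; auto; lra.
    + intros; apply ratio_sqrt_shift'_cont; auto; lra.
    + apply ratio_sqrt_shift'_one_signed; auto.
    + intros; apply ratio_sqrt_shift_bounds; auto; lra.
Qed.

Lemma osc_cos_tail s tau th :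
  0 <= tau -> (s = 1 \/ s = -1) -> forall eps, 0 < eps ->
  exists B, forall u v, B <= u -> u <= v -> Rabs (RInt (osc_cos s tau th) u v) <= eps.
Proof.
  intros Ht Hs eps Heps.
  set (B := Rmax 1 (Rmax (2 * sum_n_m b 1 m) (10 * a0 / eps))); exists B.
  intros u v Hu Huv.
  generalize (Rmax_l 1 (Rmax (2 * sum_n_m b 1 m) (10 * a0 / eps)))
             (Rmax_r 1 (Rmax (2 * sum_n_m b 1 m) (10 * a0 / eps)))
             (Rmax_l (2 * sum_n_m b 1 m) (10 * a0 / eps))
             (Rmax_r (2 * sum_n_m b 1 m) (10 * a0 / eps)); fold B; intros.
  eapply Rle_trans;
    [apply (osc_first_derivative_bound s tau th u v (1 / 2) (/ u)); auto; try lra |].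
  - left; intros; apply phase_factor_ge_half; auto; lra.
  - intros x Hx; eapply Rle_trans; [apply (inv_sqrt_shift_bounds tau); auto; lra |].
    apply Rinv_le_contravar; lra.
  - replace (5 * a0 * / u / (1 / 2)) with (10 * a0 / u) by (field; lra).
    apply Rmult_le_reg_r with u; [lra |]; unfold Rdiv; rewrite Rmult_assoc, Rinv_l by lra.
    assert (10 * a0 * / eps <= u) by (unfold Rdiv in *; lra).
    apply Rmult_le_reg_r with (/ eps); [apply Rinv_0_lt_compat; lra |].
    replace (eps * u * / eps) with u by (field; lra); lra.
Qed.

Lemma osc_cos_bound_plus tau th u v :
  0 <= tau -> 0 < u -> u <= v -> Rabs (RInt (osc_cos 1 tau th) u v) <= 6 * a0.
Proof.
  intros Ht Hu Huv; replace (6 * a0) with (a0 + 5 * a0) by ring.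
  apply (RInt_split_at_point _ u v 1); auto; try lra.
  - intros; apply osc_cos_cont; auto; lra.
  - intros c Hc Hc1; eapply Rle_trans; [apply osc_cos_trivial_bound; auto; lra | nra].
  - intros c Hc Hc1.
    eapply Rle_trans; [apply (osc_first_derivative_bound 1 tau th c v 1 1); auto; try lra | lra].
    + left; intros x Hx; unfold phase_factor.
      assert (0 <= inv_sqrt_sum m b sg x) by (apply inv_sqrt_sum_nonneg; auto; lra); lra.
    + intros x Hx; destruct (inv_sqrt_shift_bounds tau Ht x ltac:(lra)).
      eapply Rle_trans; [eauto | rewrite <- Rinv_1; apply Rinv_le_contravar; lra].
Qed.

Lemma quarter_power_facts (s1 : R) :
  0 <= s1 -> let L := sqrt (sqrt (1 + s1)) in 1 <= L /\ s1 = L ^ 4 - 1.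
Proof.
  intros Hs L.
  assert (H1 : 1 <= sqrt (1 + s1)).
  { rewrite <- sqrt_1 at 1; apply sqrt_le_1_alt; lra. }
  assert (H2 : L ^ 2 = sqrt (1 + s1))
    by (unfold L; simpl; rewrite Rmult_1_r; apply sqrt_sqrt, sqrt_pos).
  split.
  - unfold L; rewrite <- sqrt_1 at 1; apply sqrt_le_1_alt; lra.
  - replace (L ^ 4) with (L ^ 2 * L ^ 2) by ring; rewrite H2, sqrt_sqrt; lra.
Qed.

(* With [L ^ 4 = 1 + sg 1]: below [L] the trivial bound; above [L], where
   [x ^ 2 / (x ^ 2 + sg 1) >= mu := 1 / (2 L ^ 2)], either [|phase_factor| >= mu / 2]
   or the second derivative of the phase is at least [mu / 2]. *)
Lemma osc_cos_bound_minus_sigma tau th u v :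
  (forall j, (1 <= j <= m)%nat -> sg j <= sg 1%nat) -> 0 <= sg 1%nat ->
  0 <= tau -> 0 < u -> u <= v ->
  Rabs (RInt (osc_cos (-1) tau th) u v) <= 45 * a0 * Rpower (1 + sg 1%nat) (1 / 4).
Proof.
  intros Hsg1 Hs1 Ht Hu Huv.
  rewrite Rpower_quarter by lra.
  destruct (quarter_power_facts (sg 1%nat) Hs1) as [HL HL4].
  set (L := sqrt (sqrt (1 + sg 1%nat))) in *.
  set (mu := / (2 * L ^ 2)).
  assert (Hmu : 0 < mu) by (apply Rinv_0_lt_compat; nra).
  assert (Hfar : forall x, L <= x -> mu <= x ^ 2 / (x ^ 2 + sg 1%nat)).
  { intros x Hx; assert (0 < x ^ 2 + sg 1%nat) by (apply sq_plus_nonneg_pos; lra).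
    unfold mu; apply Rmult_le_reg_r with (2 * L ^ 2 * (x ^ 2 + sg 1%nat)); [nra |].
    field_simplify; try nra; rewrite HL4.
    assert (L ^ 2 <= x ^ 2) by nra; nra. }
  replace (45 * a0 * L) with (a0 * L + (20 * a0 * L + 24 * a0 * L)) by ring.
  apply (RInt_split_at_point _ u v L); auto; try nra.
  { intros; apply osc_cos_cont; auto; lra. }
  { intros c Hc HcL; eapply Rle_trans; [apply osc_cos_trivial_bound; auto; lra | nra]. }
  intros c Hc HcL.
  apply (RInt_split_at_level _ (phase_factor (-1) m b sg) c v (- (mu / 2))); try nra.
  - intros; apply osc_cos_cont; auto; lra.
  - intros; apply phase_factor_cont; auto; lra.
  - intros; apply phase_factor_nondecreasing; auto; lra.
  - intros e He Hh.
    eapply Rle_trans; [apply (osc_first_derivative_bound (-1) tau th c e (mu / 2) (/ L));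
                       auto; try lra |].
    + right; auto.
    + intros x Hx; eapply Rle_trans; [apply (inv_sqrt_shift_bounds tau); auto; lra |].
      apply Rinv_le_contravar; lra.
    + right; unfold mu; field; lra.
  - intros e He Hh.
    eapply Rle_trans; [apply (osc_second_derivative_bound (-1) tau th e v (mu / 2));
                       auto; try lra |].
    + intros x Hx; apply phase_factor_mul_derive_ge; auto; try lra.
      apply Hfar; lra.
    + replace (24 * a0 * L) with (12 * a0 * (2 * L)) by ring.
      unfold Rdiv; apply Rmult_le_compat_l; [lra |].
      apply inv_sqrt_le; try lra; right; unfold mu; field; lra.
Qed.

Lemma one_le_growth_factor k :
  (1 <= k <= m)%nat -> 1 <= INR m * sqrt (INR m) * / b k * max_1n b m.
Proof.
  intros Hk.
  assert (Hbk : 0 < b k) by (apply b_pos; auto).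
  assert (HbM : b k <= max_1n b m) by (apply max_1n_ge; auto).
  assert (Hn : 1 <= INR m) by (apply (le_INR 1); lia).
  assert (Hsn : 1 <= sqrt (INR m)) by (rewrite <- sqrt_1; apply sqrt_le_1_alt; lra).
  assert (1 <= / b k * max_1n b m).
  { apply Rmult_le_reg_l with (b k); auto; rewrite <- Rmult_assoc, Rinv_r; lra. }
  rewrite (Rmult_assoc (INR m * sqrt (INR m))).
  apply Rle_trans with (1 * 1); [lra | apply Rmult_le_compat; nra].
Qed.

(* Where [-1 <= phase_factor <= 1/2]: some [b j / sqrt (x^2 + sg j) >= 1 / (2 m)],
   which makes [phase_factor'] large, and [b k / sqrt (x^2 + sg k) <= 2]. *)
Lemma osc_cos_bound_minus_transition k th u v :
  (1 <= m)%nat -> (1 <= k <= m)%nat -> 0 < u -> u <= v ->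
  (forall x, u <= x <= v -> -1 <= phase_factor (-1) m b sg x <= 1 / 2) ->
  Rabs (RInt (osc_cos (-1) (sg k) th) u v)
    <= 72 * a0 * (INR m * sqrt (INR m) * / b k * max_1n b m).
Proof.
  intros Hm Hk Hu Huv Hh.
  assert (Hbk : 0 < b k) by (apply b_pos; auto).
  assert (Hn : 1 <= INR m) by (apply (le_INR 1); lia).
  set (M := max_1n b m); set (n := INR m) in *.
  assert (HM : 0 < M) by (apply Rlt_le_trans with (b k); [| apply max_1n_ge]; auto).
  assert (Hsn : 0 < sqrt n) by (apply sqrt_lt_R0; lra).
  set (mu := / (8 * n ^ 3 * M ^ 2)).
  assert (Hmu : 0 < mu).
  { apply Rinv_0_lt_compat, Rmult_lt_0_compat; [apply Rmult_lt_0_compat |]; try lra;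
      apply pow_lt; lra. }
  eapply Rle_trans;
    [apply (osc_second_derivative_bound_factor' (-1) (sg k) th u v mu (2 / b k));
       auto; try lra |].
  - intros x Hx; apply phase_factor'_ge; auto; try lra; apply Hh; lra.
  - intros x Hx; unfold inv_sqrt_shift.
    assert (0 < sqrt (x ^ 2 + sg k))
      by (apply sqrt_lt_R0, sq_plus_nonneg_pos; [lra | apply sg_nonneg; auto]).
    assert (Hterm := inv_sqrt_term_le_2 m b sg sg_nonneg b_pos k x Hk ltac:(lra)
                       (proj1 (Hh x Hx))).
    apply Rmult_le_reg_l with (b k); auto.
    replace (b k * (2 / b k)) with 2 by (field; lra); exact Hterm.
  - replace (72 * a0 * (n * sqrt n * / b k * M)) with (12 * a0 * (2 / b k) * (3 * (n * sqrt n * M)))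
      by (field; lra).
    unfold Rdiv at 2; apply Rmult_le_compat_l.
    { apply Rmult_le_pos; [lra | apply Rdiv_le_0_compat; lra]. }
    apply inv_sqrt_le; auto; [left; repeat apply Rmult_lt_0_compat; lra |].
    unfold mu; rewrite Rinv_inv.
    assert (Hsn2 : sqrt n * sqrt n = n) by (apply sqrt_sqrt; lra).
    assert (0 < n ^ 3 * M ^ 2) by (apply Rmult_lt_0_compat; apply pow_lt; lra).
    replace ((3 * (n * sqrt n * M)) ^ 2) with (9 * (n ^ 2 * (sqrt n * sqrt n)) * M ^ 2) by ring.
    rewrite Hsn2; nra.
Qed.

Lemma osc_cos_bound_minus_b k th u v :
  (1 <= m)%nat -> (1 <= k <= m)%nat -> 0 < u -> u <= v ->
  Rabs (RInt (osc_cos (-1) (sg k) th) u v)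
    <= 88 * a0 * (Rpower (INR m) (3 / 2) * / b k * max_1n b m).
Proof.
  intros Hm Hk Hu Huv.
  assert (Ht : 0 <= sg k) by (apply sg_nonneg; auto).
  rewrite Rpower_three_halves by (apply lt_0_INR; lia).
  assert (HBq := one_le_growth_factor k Hk).
  set (Bq := INR m * sqrt (INR m) * / b k * max_1n b m) in *.
  assert (Hq1 : forall x, 1 <= x -> inv_sqrt_shift (sg k) x <= 1).
  { intros x Hx; eapply Rle_trans; [apply (inv_sqrt_shift_bounds (sg k)); auto; lra |].
    rewrite <- Rinv_1; apply Rinv_le_contravar; lra. }
  assert (Hcf : forall x, u <= x <= v -> continuous (osc_cos (-1) (sg k) th) x)
    by (intros; apply osc_cos_cont; auto; lra).
  apply Rle_trans with (a0 + (5 * a0 + (72 * a0 * Bq + 10 * a0))); [| nra].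
  apply (RInt_split_at_point _ u v 1); auto; try nra.
  { intros c Hc Hc1; eapply Rle_trans; [apply osc_cos_trivial_bound; auto; lra | nra]. }
  intros c Hc Hc1.
  apply (RInt_split_at_level _ (phase_factor (-1) m b sg) c v (-1)); try nra;
    [intros; apply Hcf; lra | intros; apply phase_factor_cont; auto; lra
    | intros; apply phase_factor_nondecreasing; auto; lra | |].
  { intros e He Hh.
    eapply Rle_trans; [apply (osc_first_derivative_bound (-1) (sg k) th c e 1 1); auto; try lra |].
    - right; auto.
    - intros; apply Hq1; lra.
    - lra. }
  intros e He Hh.
  apply (RInt_split_at_level _ (phase_factor (-1) m b sg) e v (1 / 2)); try nra;
    [intros; apply Hcf; lra | intros; apply phase_factor_cont; auto; lra
    | intros; apply phase_factor_nondecreasing; auto; lra | |].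
  - intros w Hw Hh2; apply osc_cos_bound_minus_transition; auto; try lra.
    intros x Hx; split; [apply Hh | apply Hh2]; lra.
  - intros w Hw Hh2.
    eapply Rle_trans;
      [apply (osc_first_derivative_bound (-1) (sg k) th w v (1 / 2) 1); auto; try lra |].
    + left; auto.
    + intros; apply Hq1; lra.
    + lra.
Qed.

Section Largest_sigma_first.

Hypothesis sg_le_sg1 : forall j, (1 <= j <= m)%nat -> sg j <= sg 1%nat.
Hypothesis sg1_nonneg : 0 <= sg 1%nat.

Let quarter_power_ge_1 : 1 <= Rpower (1 + sg 1%nat) (1 / 4).
Proof. apply one_le_Rpower; lra. Qed.

Lemma osc_cos_bound_quarter s tau th u v :
  (s = 1 \/ s = -1) -> 0 <= tau -> 0 < u -> u <= v ->
  Rabs (RInt (osc_cos s tau th) u v) <= 100 * a0 * Rpower (1 + sg 1%nat) (1 / 4).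
Proof.
  intros [-> | ->] Ht Hu Huv.
  - eapply Rle_trans; [apply osc_cos_bound_plus; auto | nra].
  - eapply Rle_trans; [apply osc_cos_bound_minus_sigma; auto | nra].
Qed.

Lemma osc_cos_bound_min s k th u v :
  (1 <= m)%nat -> (1 <= k <= m)%nat -> (s = 1 \/ s = -1) -> 0 < u -> u <= v ->
  Rabs (RInt (osc_cos s (sg k) th) u v)
    <= 100 * a0 * Rmin (Rpower (1 + sg 1%nat) (1 / 4))
                       (Rpower (INR m) (3 / 2) * / b k * max_1n b m).
Proof.
  intros Hm Hk Hs Hu Huv.
  assert (Ht : 0 <= sg k) by (apply sg_nonneg; auto).
  assert (1 <= Rpower (INR m) (3 / 2) * / b k * max_1n b m).
  { rewrite Rpower_three_halves by (apply lt_0_INR; lia); apply one_le_growth_factor; auto. }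
  apply Rmin_case_strong; intros Hmin.
  - apply osc_cos_bound_quarter; auto.
  - destruct Hs as [-> | ->].
    + eapply Rle_trans; [apply osc_cos_bound_plus; auto | nra].
    + eapply Rle_trans; [apply osc_cos_bound_minus_b; auto | nra].
Qed.

End Largest_sigma_first.

Lemma osc_improper_integral (g : R -> R) s tau K :
  0 <= tau -> (s = 1 \/ s = -1) ->
  (forall x, 0 < x -> g x = amplitude tau om x) -> (forall x, 0 < x -> continuous g x) ->
  (forall th u v, 0 < u -> u <= v -> Rabs (RInt (osc_cos s tau th) u v) <= K) ->
  exists I, improper_int_0_oo (osc (phase s m b sg) g) I /\ Cmod I <= 2 * K.
Proof.
  intros Ht Hs Hg Hcg HK.
  assert (Hext : forall th u v, 0 < u -> u <= v ->
    RInt (fun x => g x * cos (phase s m b sg x + th)) u v = RInt (osc_cos s tau th) u v).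
  { intros th u v Hu Huv; apply RInt_ext; intros x Hx.
    rewrite Rmin_left, Rmax_right in Hx by lra; rewrite Hg by lra; reflexivity. }
  apply (improper_int_0_oo_osc _ _ a0).
  - intros x Hx; split; [apply phase_cont | apply Hcg]; auto.
  - intros x Hx; rewrite Hg by lra; apply amplitude_abs_le; lra.
  - intros th eps Heps; destruct (osc_cos_tail s tau th Ht Hs eps Heps) as [B HB].
    exists (Rmax B 1); intros u v Hu Huv.
    generalize (Rmax_l B 1) (Rmax_r B 1); intros.
    rewrite Hext by lra; apply HB; lra.
  - intros th u v Hu Huv; rewrite Hext by lra; auto.
Qed.

End Oscillatory_integral.

Theorem lemma6p1 :
  forall a0 : R,
  exists C0 : R,
  forall omega : R -> R,
    (* twice differentiable on (0,oo) *)
    (forall l, 0 < l -> ex_derive omega l /\ ex_derive (Derive omega) l) ->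
    (* monotone on (0,oo) *)
    ((forall x y, 0 < x -> x <= y -> omega x <= omega y) \/
     (forall x y, 0 < x -> x <= y -> omega y <= omega x)) ->
    (* values in [0,oo) *)
    (forall l, 0 < l -> 0 <= omega l) ->
    (* |omega^(j)(l)| <= a0 l^(-j), j = 0,1,2 *)
    (forall (j : nat) l, (j <= 2)%nat -> 0 < l ->
       Rabs (Derive_n omega j l) <= a0 / l ^ j) ->
  forall (m k : nat) (sigma b : nat -> R) (s : R),
    (1 <= m)%nat -> (1 <= k <= m)%nat ->
    (forall j, (1 <= j < m)%nat -> sigma (S j) <= sigma j) ->
    0 <= sigma m ->
    (forall j, (1 <= j <= m)%nat -> 0 < b j) ->
    (s = 1 \/ s = -1) ->
    (exists I : C,
       improper_int_0_oo
         (osc (phase s m b sigma)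
              (fun l => l / sqrt (l ^ 2 + sigma k) * omega l)) I /\
       Cmod I <= C0 * Rmin (Rpower (1 + sigma 1%nat) (1/4))
                           (Rpower (INR m) (3/2) * / b k * max_1n b m)) /\
    (exists I : C,
       improper_int_0_oo (osc (phase s m b sigma) omega) I /\
       Cmod I <= C0 * Rpower (1 + sigma 1%nat) (1/4)).
Proof.
  intros a0; exists (200 * a0).
  intros omega Hd Hmono Hnn Hbnd m k sigma b s Hm Hk Hsigma Hsm Hb Hs.
  assert (Hom : forall x, 0 < x -> 0 <= omega x <= a0).
  { intros x Hx; generalize (Hbnd 0%nat x ltac:(lia) Hx); simpl; rewrite Rdiv_1_r.
    intros H; apply Rabs_le_between in H; split; [apply Hnn |]; lra. }
  assert (Hsg1 : forall j, (1 <= j <= m)%nat -> sigma j <= sigma 1%nat)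
    by (intros; apply (nonincreasing_seq_le sigma m); auto; lia).
  assert (Hsg : forall j, (1 <= j <= m)%nat -> 0 <= sigma j).
  { intros j Hj; apply Rle_trans with (sigma m); auto.
    apply (nonincreasing_seq_le sigma m); auto; lia. }
  assert (Hd1 : forall x, 0 < x -> ex_derive omega x) by apply Hd.
  assert (Hd2 : forall x, 0 < x -> ex_derive (Derive omega) x) by apply Hd.
  split.
  - destruct (osc_improper_integral a0 omega Hd1 Hd2 Hmono Hom m b sigma Hsg Hb
                (fun l => l / sqrt (l ^ 2 + sigma k) * omega l) s (sigma k)
                (100 * a0 * Rmin (Rpower (1 + sigma 1%nat) (1 / 4))
                                 (Rpower (INR m) (3 / 2) * / b k * max_1n b m)))
      as [I [HI HIK]]; auto.
    + intros; apply amplitude_cont; auto.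
    + intros; apply osc_cos_bound_min; auto; apply Hsg; lia.
    + exists I; split; auto; lra.
  - destruct (osc_improper_integral a0 omega Hd1 Hd2 Hmono Hom m b sigma Hsg Hb omega s 0
                (100 * a0 * Rpower (1 + sigma 1%nat) (1 / 4))) as [I [HI HIK]]; auto; try lra.
    + intros x Hx; unfold amplitude; rewrite Rplus_0_r, sqrt_pow2 by lra; field; lra.
    + intros x Hx; apply (ex_derive_continuous (V := R_NormedModule)); auto.
    + intros; apply osc_cos_bound_quarter; auto; try lra; apply Hsg; lia.
    + exists I; split; auto; lra.
Qed.
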